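(* Consider the functors $$U_l:lrTORS\to rTORS,\quad U_r:lrTORS\to lTORS,\quad c_l:lTORS\to \mathrm{Pregpd},\quad c_r:rTORS\to\mathrm{Pregpd},\quad env:\mathrm{Pregpd}\to lrTORS$$ described in the context. Then: (i) all five functors are equivalences of categories; (ii) $c_r\circ U_l=c_l\circ U_r$ on the nose (functors written in order of application from right to left here); (iii) the composite $c_l\circ U_r\circ env$ is, on the nose, the identity functor of $\mathrm{Pregpd}$ (and hence so is $c_r\circ U_l\circ env$); (iv) the cyclic composites $env\circ c_l\circ U_r$ ($=env\circ c_r\circ U_l$) on $lrTORS$, $U_r\circ env\circ c_l$ on $lTORS$ and $U_l\circ env\circ c_r$ on $rTORS$ are each naturally isomorphic to the respective identity functor.
   Context: Groupoids are inhabited; composition is written left to right ($f:a\to b$, $g:b\to c$ give $f\circ g:a\to c$). Pregroupoids. A pregroupoid on $A,B$ is an inhabited set $X$ with surjections $\alpha:X\to A$, $\beta:X\to B$ and a partial ternary operation $yx^{-1}z$, defined exactly when $\beta(x)=\beta(y)$ and $\alpha(x)=\alpha(z)$, with $\alpha(yx^{-1}z)=\alpha(y)$, $\beta(yx^{-1}z)=\beta(z)$, satisfying (when defined) $xx^{-1}z=z$, $yx^{-1}x=y$, $vy^{-1}(yx^{-1}z)=vx^{-1}z$, $(yx^{-1}z)z^{-1}w=yx^{-1}w$. Morphisms are triples of maps $A\to A'$, $B\to B'$, $X\to X'$ commuting with $\alpha,\beta$ and preserving the ternary operation. This category is $\mathrm{Pregpd}$. Actions and torsors. A left action of a groupoid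 $\mathbf G$ with object set $A$ on a map $\alpha:X\to A$ assigns to $g\in G_1$ and $x\in X$ with $\alpha(x)=d_1(g)$ an element $g\cdot x$ with $\alpha(g\cdot x)=d_0(g)$, satisfying unit and associativity laws. A morphism $(\mathbf G,X\to A)\to(\mathbf G',X'\to A')$ is a functor $\mathbf G\to\mathbf G'$ and a map $X\to X'$ compatible with the structure maps and actions. The action is a (left) $\mathbf G$-torsor if $X$ is inhabited, $\alpha$ is surjective, and for $x,y\in X$ there is at most one $g$ with $g\cdot x=y$; its orbit set is the quotient $\beta:X\to B:=X/\mathbf G$ by the relation ''$y=g\cdot x$ for some $g$''. $lTORS$ is the full subcategory of left actions consisting of left torsors. Right actions $x\cdot h$ of a groupoid $\mathbf H$ with object set $B$ on $\beta:X\to B$ (defined when $\beta(x)=d_0(h)$, with $\beta(x\cdot h)=d_1(h)$), right torsors and $rTORS$ are defined symmetrically. A bi-action is a span $A\xleftarrow{\alpha}X\xrightarrow{\beta}B$ with a left action of $\mathbf G$ (objects $A$) on $\alpha$ and a right action of $\mathbf H$ (objects $B$) on $\beta$ that commute: $(g\cdot x)\cdot h=g\cdot(x\cdot h)$; morphisms are pairs of functors plus a map of spans compatible with everything. A bitorsor is a bi-action that is a left torsor and a right torsor, such that $\beta$ is the quotient map for the left action's equivalence relation and $\alpha$ the quotient map for the right action's. $lrTORS$ is the full subcategory of bitorsors. $U_r:lrTORS\to lTORS$ and $U_l:lrTORS\to rTORS$ forget the right, resp. left, action. $c_l$: a left $\mathbf G$-torsor $\alpha:X\to A$ with orbit map $\beta:X\to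 B$ is sent to the pregroupoid $A\xleftarrow{\alpha}X\xrightarrow{\beta}B$ with $yx^{-1}z:=g\cdot z$, where $g$ is the unique arrow with $g\cdot x=y$; morphisms go to the induced morphisms. $c_r$: a right $\mathbf H$-torsor $\beta:X\to B$ with orbit map $\alpha:X\to A$ is sent to $A\xleftarrow{\alpha}X\xrightarrow{\beta}B$ with $yx^{-1}z:=y\cdot h$, $h$ the unique arrow with $x\cdot h=z$. Enveloping groupoid $X^+$ of a pregroupoid $A\xleftarrow{\alpha}X\xrightarrow{\beta}B$. On pairs $(x,z)$ with $\alpha(x)=\alpha(z)$ put $(x,z)\sim(y,u)$ iff $\beta(x)=\beta(y)$ and $u=yx^{-1}z$; this is an equivalence relation, the class of $(x,z)$ is written $x^{-1}z$, the set of classes $X^{-1}X$. On pairs $(x,y)$ with $\beta(x)=\beta(y)$ put $(x,y)\approx(z,u)$ iff $\alpha(x)=\alpha(z)$ and $u=yx^{-1}z$; class written $yx^{-1}$, set of classes $XX^{-1}$. $X^+$ has object set $A\sqcup B$ and arrows: $yx^{-1}\in XX^{-1}$ as an arrow $\alpha(y)\to\alpha(x)$; $x^{-1}z\in X^{-1}X$ as an arrow $\beta(x)\to\beta(z)$; $x\in X$ as an arrow $\alpha(x)\to\beta(x)$; and a formal copy $x^{-1}$ of each $x\in X$ as an arrow $\beta(x)\to\alpha(x)$. Composition (left to right), writing elements of $X$ as $x_1,x_2,\dots$: $x_1x_2^{-1}\circ x_3x_4^{-1}=(x_1x_2^{-1}x_3)x_4^{-1}$; $x_1x_2^{-1}\circ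 x_3=x_1x_2^{-1}x_3$; $x_1\circ x_2^{-1}=x_1x_2^{-1}$; $x_1\circ x_2^{-1}x_3=x_1x_2^{-1}x_3$; $x_3^{-1}\circ x_2x_1^{-1}=(x_1x_2^{-1}x_3)^{-1}$; $x_2^{-1}\circ x_3=x_2^{-1}x_3$; $x_3^{-1}x_2\circ x_1^{-1}=(x_1x_2^{-1}x_3)^{-1}$; $x_2^{-1}x_3\circ x_4^{-1}x_5=x_2^{-1}(x_3x_4^{-1}x_5)$. This is a groupoid. For subsets $A,B$ of the object set, $X^+(A,B)$ denotes arrows with domain in $A$, codomain in $B$; thus $X^+(A,B)=X$, $X^+(A,A)=XX^{-1}$, $X^+(B,B)=X^{-1}X$. $env$: a pregroupoid $X$ is sent to the bitorsor $A\xleftarrow{\alpha}X^+(A,B)=X\xrightarrow{\beta}B$ with left action of the groupoid $X^+(A,A)$ (object set $A$) by $g\cdot x:=g\circ x$ and right action of $X^+(B,B)$ (object set $B$) by $x\cdot h:=x\circ h$; morphisms of pregroupoids go to the induced morphisms. *)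

From Stdlib Require Import ClassicalEpsilon ProofIrrelevance FunctionalExtensionality.

Definition surj {X Y : Type} (f : X -> Y) : Prop := forall y, exists x, f x = y.

Record Cat : Type := {
  Ob : Type;
  Hom : Ob -> Ob -> Type;
  idm : forall a, Hom a a;
  cmp : forall a b c, Hom b c -> Hom a b -> Hom a c }.
Arguments idm {_} _.
Arguments cmp {_ _ _ _} _ _.

Record Functor (C D : Cat) : Type := {
  fo : Ob C -> Ob D;
  fm : forall a b, Hom C a b -> Hom D (fo a) (fo b) }.
Arguments fo {_ _} _ _.
Arguments fm {_ _} _ {_ _} _.

Definition is_functor {C D : Cat} (F : Functor C D) : Prop :=
  (forall a, fm F (idm a) = idm (fo F a)) /\
  (forall a b c (g : Hom C b c) (f : Hom C a b), fm F (cmp g f) = cmp (fm F g) (fm F f)).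

Definition Fid (C : Cat) : Functor C C :=
  {| fo := fun a => a; fm := fun a b f => f |}.

Definition Fcomp {C D E : Cat} (G : Functor D E) (F : Functor C D) : Functor C E :=
  {| fo := fun a => fo G (fo F a); fm := fun a b f => fm G (fm F f) |}.

Definition is_iso {C : Cat} {a b : Ob C} (f : Hom C a b) : Prop :=
  exists g : Hom C b a, cmp g f = idm a /\ cmp f g = idm b.

Definition nat_iso {C D : Cat} (F G : Functor C D) : Prop :=
  exists eta : forall a, Hom D (fo F a) (fo G a),
    (forall a, is_iso (eta a)) /\
    (forall a b (f : Hom C a b), cmp (eta b) (fm F f) = cmp (fm G f) (eta a)).

Definition is_equivalence {C D : Cat} (F : Functor C D) : Prop :=
  is_functor F /\
  exists G : Functor D C, is_functor G /\
    nat_iso (Fcomp G F) (Fid C) /\ nat_iso (Fcomp F G) (Fid D).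

Definition hcast {C : Cat} {a a' b b' : Ob C} (e1 : a = a') (e2 : b = b')
  (f : Hom C a b) : Hom C a' b' :=
  match e1 in _ = a1, e2 in _ = b1 return Hom C a1 b1 with
  | eq_refl, eq_refl => f end.

Definition functor_eq {C D : Cat} (F G : Functor C D) : Prop :=
  exists e : forall a, fo F a = fo G a,
    forall a b (f : Hom C a b), hcast (e a) (e b) (fm F f) = fm G f.

(* Groupoids with object set A: arrows with domain d0 and codomain d1,  *)
(* partial composition written left to right (f then g).               *)

Record GpdData (A : Type) : Type := {
  arr : Type;
  d0 : arr -> A;
  d1 : arr -> A;
  idn : A -> arr;
  gcomp : forall f g : arr, d1 f = d0 g -> arr }.
Arguments arr {_} _.
Arguments d0 {_ _} _.
Arguments d1 {_ _} _.
Arguments idn {_} _ _.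
Arguments gcomp {_ _} _ _ _.

Definition gpd_ax {A : Type} (G : GpdData A) : Prop :=
  inhabited A /\
  (forall a, d0 (idn G a) = a /\ d1 (idn G a) = a) /\
  (forall (f g : arr G) (H : d1 f = d0 g),
      d0 (gcomp f g H) = d0 f /\ d1 (gcomp f g H) = d1 g) /\
  (forall (f : arr G) (H : d1 (idn G (d0 f)) = d0 f), gcomp (idn G (d0 f)) f H = f) /\
  (forall (f : arr G) (H : d1 f = d0 (idn G (d1 f))), gcomp f (idn G (d1 f)) H = f) /\
  (forall (f g h : arr G) (H1 : d1 f = d0 g) (H2 : d1 (gcomp f g H1) = d0 h)
          (H3 : d1 g = d0 h) (H4 : d1 f = d0 (gcomp g h H3)),
      gcomp (gcomp f g H1) h H2 = gcomp f (gcomp g h H3) H4) /\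
  (forall f : arr G, exists (g : arr G) (H1 : d1 f = d0 g) (H2 : d1 g = d0 f),
      gcomp f g H1 = idn G (d0 f) /\ gcomp g f H2 = idn G (d1 f)).

Definition gfun_ax {A A' : Type} (G : GpdData A) (G' : GpdData A') (m : A -> A')
  (F : arr G -> arr G') : Prop :=
  (forall g, d0 (F g) = m (d0 g) /\ d1 (F g) = m (d1 g)) /\
  (forall a, F (idn G a) = idn G' (m a)) /\
  (forall (f g : arr G) (H : d1 f = d0 g) (H' : d1 (F f) = d0 (F g)),
      F (gcomp f g H) = gcomp (F f) (F g) H').

Definition lact_ax {A X : Type} (al : X -> A) (G : GpdData A)
  (act : forall (g : arr G) (x : X), al x = d1 g -> X) : Prop :=
  (forall g x H, al (act g x H) = d0 g) /\
  (forall x (H : al x = d1 (idn G (al x))), act (idn G (al x)) x H = x) /\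
  (forall (g h : arr G) (x : X) (H1 : al x = d1 h) (H2 : al (act h x H1) = d1 g)
          (H3 : d1 g = d0 h) (H4 : al x = d1 (gcomp g h H3)),
      act g (act h x H1) H2 = act (gcomp g h H3) x H4).

Definition ract_ax {B X : Type} (be : X -> B) (G : GpdData B)
  (act : forall (x : X) (h : arr G), be x = d0 h -> X) : Prop :=
  (forall x h H, be (act x h H) = d1 h) /\
  (forall x (H : be x = d0 (idn G (be x))), act x (idn G (be x)) H = x) /\
  (forall (x : X) (h k : arr G) (H1 : be x = d0 h) (H2 : be (act x h H1) = d0 k)
          (H3 : d1 h = d0 k) (H4 : be x = d0 (gcomp h k H3)),
      act (act x h H1) k H2 = act x (gcomp h k H3) H4).

Record LTData : Type := {
  lt_A : Type; lt_B : Type; lt_X : Type;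
  lt_al : lt_X -> lt_A; lt_be : lt_X -> lt_B;
  lt_G : GpdData lt_A;
  lt_act : forall (g : arr lt_G) (x : lt_X), lt_al x = d1 g -> lt_X }.

Definition ltors_ax (T : LTData) : Prop :=
  gpd_ax (lt_G T) /\ lact_ax (lt_al T) (lt_G T) (lt_act T) /\
  inhabited (lt_X T) /\ surj (lt_al T) /\
  (forall (g g' : arr (lt_G T)) x H H',
      lt_act T g x H = lt_act T g' x H' -> g = g') /\
  surj (lt_be T) /\
  (forall x y, lt_be T x = lt_be T y <-> exists g H, lt_act T g x H = y).

Record LTors : Type := { ltd :> LTData; ltax : ltors_ax ltd }.

Record LTHomData (T T' : LTData) : Type := {
  lh_A : lt_A T -> lt_A T'; lh_B : lt_B T -> lt_B T'; lh_X : lt_X T -> lt_X T';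
  lh_G : arr (lt_G T) -> arr (lt_G T') }.
Arguments lh_A {_ _} _ _.
Arguments lh_B {_ _} _ _.
Arguments lh_X {_ _} _ _.
Arguments lh_G {_ _} _ _.

Definition lthom_ax {T T' : LTData} (f : LTHomData T T') : Prop :=
  gfun_ax (lt_G T) (lt_G T') (lh_A f) (lh_G f) /\
  (forall x, lt_al T' (lh_X f x) = lh_A f (lt_al T x)) /\
  (forall x, lt_be T' (lh_X f x) = lh_B f (lt_be T x)) /\
  (forall g x H H', lh_X f (lt_act T g x H) = lt_act T' (lh_G f g) (lh_X f x) H').

Record LTHom (T T' : LTors) : Type := { lthd :> LTHomData T T'; lthax : lthom_ax lthd }.
Arguments lthd {_ _} _.
Arguments lthax {_ _} _.

Record RTData : Type := {
  rt_A : Type; rt_B : Type; rt_X : Type;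
  rt_al : rt_X -> rt_A; rt_be : rt_X -> rt_B;
  rt_H : GpdData rt_B;
  rt_act : forall (x : rt_X) (h : arr rt_H), rt_be x = d0 h -> rt_X }.

Definition rtors_ax (T : RTData) : Prop :=
  gpd_ax (rt_H T) /\ ract_ax (rt_be T) (rt_H T) (rt_act T) /\
  inhabited (rt_X T) /\ surj (rt_be T) /\
  (forall (h h' : arr (rt_H T)) x H H',
      rt_act T x h H = rt_act T x h' H' -> h = h') /\
  surj (rt_al T) /\
  (forall x y, rt_al T x = rt_al T y <-> exists h H, rt_act T x h H = y).

Record RTors : Type := { rtd :> RTData; rtax : rtors_ax rtd }.

Record RTHomData (T T' : RTData) : Type := {
  rh_A : rt_A T -> rt_A T'; rh_B : rt_B T -> rt_B T'; rh_X : rt_X T -> rt_X T';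
  rh_H : arr (rt_H T) -> arr (rt_H T') }.
Arguments rh_A {_ _} _ _.
Arguments rh_B {_ _} _ _.
Arguments rh_X {_ _} _ _.
Arguments rh_H {_ _} _ _.

Definition rthom_ax {T T' : RTData} (f : RTHomData T T') : Prop :=
  gfun_ax (rt_H T) (rt_H T') (rh_B f) (rh_H f) /\
  (forall x, rt_al T' (rh_X f x) = rh_A f (rt_al T x)) /\
  (forall x, rt_be T' (rh_X f x) = rh_B f (rt_be T x)) /\
  (forall x h H H', rh_X f (rt_act T x h H) = rt_act T' (rh_X f x) (rh_H f h) H').

Record RTHom (T T' : RTors) : Type := { rthd :> RTHomData T T'; rthax : rthom_ax rthd }.
Arguments rthd {_ _} _.
Arguments rthax {_ _} _.

Record BTData : Type := {
  bt_A : Type; bt_B : Type; bt_X : Type;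
  bt_al : bt_X -> bt_A; bt_be : bt_X -> bt_B;
  bt_G : GpdData bt_A; bt_H : GpdData bt_B;
  bt_lact : forall (g : arr bt_G) (x : bt_X), bt_al x = d1 g -> bt_X;
  bt_ract : forall (x : bt_X) (h : arr bt_H), bt_be x = d0 h -> bt_X }.

Definition bt_left (T : BTData) : LTData :=
  {| lt_A := bt_A T; lt_B := bt_B T; lt_X := bt_X T; lt_al := bt_al T; lt_be := bt_be T;
     lt_G := bt_G T; lt_act := bt_lact T |}.
Definition bt_right (T : BTData) : RTData :=
  {| rt_A := bt_A T; rt_B := bt_B T; rt_X := bt_X T; rt_al := bt_al T; rt_be := bt_be T;
     rt_H := bt_H T; rt_act := bt_ract T |}.

Definition btors_ax (T : BTData) : Prop :=
  ltors_ax (bt_left T) /\ rtors_ax (bt_right T) /\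
  (forall (g : arr (bt_G T)) (x : bt_X T) (h : arr (bt_H T))
          (H1 : bt_be T x = d0 h) (H2 : bt_al T (bt_ract T x h H1) = d1 g)
          (H3 : bt_al T x = d1 g) (H4 : bt_be T (bt_lact T g x H3) = d0 h),
      bt_lact T g (bt_ract T x h H1) H2 = bt_ract T (bt_lact T g x H3) h H4).

Record BTors : Type := { btd :> BTData; btax : btors_ax btd }.

Record BTHomData (T T' : BTData) : Type := {
  bh_A : bt_A T -> bt_A T'; bh_B : bt_B T -> bt_B T'; bh_X : bt_X T -> bt_X T';
  bh_G : arr (bt_G T) -> arr (bt_G T'); bh_H : arr (bt_H T) -> arr (bt_H T') }.
Arguments bh_A {_ _} _ _.
Arguments bh_B {_ _} _ _.
Arguments bh_X {_ _} _ _.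
Arguments bh_G {_ _} _ _.
Arguments bh_H {_ _} _ _.

Definition bh_left {T T' : BTData} (f : BTHomData T T') : LTHomData (bt_left T) (bt_left T') :=
  @Build_LTHomData (bt_left T) (bt_left T') (bh_A f) (bh_B f) (bh_X f) (bh_G f).
Definition bh_right {T T' : BTData} (f : BTHomData T T') : RTHomData (bt_right T) (bt_right T') :=
  @Build_RTHomData (bt_right T) (bt_right T') (bh_A f) (bh_B f) (bh_X f) (bh_H f).

Definition bthom_ax {T T' : BTData} (f : BTHomData T T') : Prop :=
  lthom_ax (bh_left f) /\ rthom_ax (bh_right f).

Record BTHom (T T' : BTors) : Type := { bthd :> BTHomData T T'; bthax : bthom_ax bthd }.
Arguments bthd {_ _} _.
Arguments bthax {_ _} _.

(* Pregroupoids.  [pop x y z H1 H2] is  y x^{-1} z .                    *)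

Record PData : Type := {
  pA : Type; pB : Type; pX : Type;
  pal : pX -> pA; pbe : pX -> pB;
  pop : forall x y z : pX, pbe x = pbe y -> pal x = pal z -> pX }.

Definition pregpd_ax (P : PData) : Prop :=
  inhabited (pX P) /\ surj (pal P) /\ surj (pbe P) /\
  (forall x y z H1 H2, pal P (pop P x y z H1 H2) = pal P y /\
                       pbe P (pop P x y z H1 H2) = pbe P z) /\
  (forall x z H1 H2, pop P x x z H1 H2 = z) /\
  (forall x y H1 H2, pop P x y x H1 H2 = y) /\
  (forall x y z v (H1 : pbe P x = pbe P y) (H2 : pal P x = pal P z)
          (H3 : pbe P y = pbe P v) (H4 : pal P y = pal P (pop P x y z H1 H2))
          (H5 : pbe P x = pbe P v) (H6 : pal P x = pal P z),
      pop P y v (pop P x y z H1 H2) H3 H4 = pop P x v z H5 H6) /\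
  (forall x y z w (H1 : pbe P x = pbe P y) (H2 : pal P x = pal P z)
          (H3 : pbe P z = pbe P (pop P x y z H1 H2)) (H4 : pal P z = pal P w)
          (H5 : pbe P x = pbe P y) (H6 : pal P x = pal P w),
      pop P z (pop P x y z H1 H2) w H3 H4 = pop P x y w H5 H6).

Record Pregpd : Type := { pd :> PData; pax : pregpd_ax pd }.

Record PHomData (P P' : PData) : Type := {
  ph_A : pA P -> pA P'; ph_B : pB P -> pB P'; ph_X : pX P -> pX P' }.
Arguments ph_A {_ _} _ _.
Arguments ph_B {_ _} _ _.
Arguments ph_X {_ _} _ _.

Definition phom_ax {P P' : PData} (f : PHomData P P') : Prop :=
  (forall x, pal P' (ph_X f x) = ph_A f (pal P x)) /\
  (forall x, pbe P' (ph_X f x) = ph_B f (pbe P x)) /\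
  (forall x y z H1 H2 H1' H2',
      ph_X f (pop P x y z H1 H2) = pop P' (ph_X f x) (ph_X f y) (ph_X f z) H1' H2').

Record PHom (P P' : Pregpd) : Type := { phd :> PHomData P P'; phax : phom_ax phd }.
Arguments phd {_ _} _.
Arguments phax {_ _} _.

Lemma gfun_id {A} (G : GpdData A) : gfun_ax G G (fun a => a) (fun g => g).
Proof.
  split; [|split]; auto.
  intros f g H H'. rewrite (proof_irrelevance _ H H'). reflexivity.
Qed.

Lemma gfun_comp {A A' A''} (G : GpdData A) (G' : GpdData A') (G'' : GpdData A'')
  m F m' F' : gfun_ax G G' m F -> gfun_ax G' G'' m' F' ->
  gfun_ax G G'' (fun a => m' (m a)) (fun g => F' (F g)).
Proof.
  intros [h1 [h2 h3]] [k1 [k2 k3]]. split; [|split].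
  - intro g. destruct (h1 g) as [e1 e2]. destruct (k1 (F g)) as [e3 e4].
    rewrite e3, e4, e1, e2. split; reflexivity.
  - intro a. rewrite h2, k2. reflexivity.
  - intros f g H H'.
    assert (H0 : d1 (F f) = d0 (F g)).
    { destruct (h1 f) as [_ e1]. destruct (h1 g) as [e2 _]. rewrite e1, e2, H. reflexivity. }
    rewrite (h3 f g H H0). apply k3.
Qed.

Definition lthom_id (T : LTors) : LTHom T T.
Proof.
  refine {| lthd := @Build_LTHomData T T (fun a => a) (fun b => b) (fun x => x) (fun g => g) |}.
  split; [apply gfun_id|split; [|split]]; try reflexivity.
  intros g x H H'. simpl. rewrite (proof_irrelevance _ H H'). reflexivity.
Defined.

Definition lthom_comp (T T' T'' : LTors) (g : LTHom T' T'') (f : LTHom T T') : LTHom T T''.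
Proof.
  refine {| lthd := @Build_LTHomData T T'' (fun a => lh_A g (lh_A f a))
             (fun b => lh_B g (lh_B f b)) (fun x => lh_X g (lh_X f x))
             (fun k => lh_G g (lh_G f k)) |}.
  destruct f as [f [f1 [f2 [f3 f4]]]]; destruct g as [g [g1 [g2 [g3 g4]]]]; simpl.
  split; [apply (gfun_comp _ _ _ _ _ _ _ f1 g1)|split; [|split]]; simpl.
  - intro x. rewrite g2, f2. reflexivity.
  - intro x. rewrite g3, f3. reflexivity.
  - intros k x H H'.
    assert (H0 : lt_al T' (lh_X f x) = d1 (lh_G f k)).
    { rewrite f2, H. destruct f1 as [f1 _]. destruct (f1 k) as [_ e]. rewrite e. reflexivity. }
    rewrite (f4 k x H H0). apply g4.
Defined.

Definition LTCat : Cat :=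
  {| Ob := LTors; Hom := LTHom; idm := lthom_id; cmp := lthom_comp |}.

Definition rthom_id (T : RTors) : RTHom T T.
Proof.
  refine {| rthd := @Build_RTHomData T T (fun a => a) (fun b => b) (fun x => x) (fun g => g) |}.
  split; [apply gfun_id|split; [|split]]; try reflexivity.
  intros x h H H'. simpl. rewrite (proof_irrelevance _ H H'). reflexivity.
Defined.

Definition rthom_comp (T T' T'' : RTors) (g : RTHom T' T'') (f : RTHom T T') : RTHom T T''.
Proof.
  refine {| rthd := @Build_RTHomData T T'' (fun a => rh_A g (rh_A f a))
             (fun b => rh_B g (rh_B f b)) (fun x => rh_X g (rh_X f x))
             (fun k => rh_H g (rh_H f k)) |}.
  destruct f as [f [f1 [f2 [f3 f4]]]]; destruct g as [g [g1 [g2 [g3 g4]]]]; simpl.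
  split; [apply (gfun_comp _ _ _ _ _ _ _ f1 g1)|split; [|split]]; simpl.
  - intro x. rewrite g2, f2. reflexivity.
  - intro x. rewrite g3, f3. reflexivity.
  - intros x k H H'.
    assert (H0 : rt_be T' (rh_X f x) = d0 (rh_H f k)).
    { rewrite f3, H. destruct f1 as [f1 _]. destruct (f1 k) as [e _]. rewrite e. reflexivity. }
    rewrite (f4 x k H H0). apply g4.
Defined.

Definition RTCat : Cat :=
  {| Ob := RTors; Hom := RTHom; idm := rthom_id; cmp := rthom_comp |}.

Definition bt_lt (T : BTors) : LTors := {| ltd := bt_left T; ltax := proj1 (btax T) |}.
Definition bt_rt (T : BTors) : RTors := {| rtd := bt_right T; rtax := proj1 (proj2 (btax T)) |}.
Definition bh_lt {T T' : BTors} (f : BTHom T T') : LTHom (bt_lt T) (bt_lt T') :=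
  @Build_LTHom (bt_lt T) (bt_lt T') (bh_left f) (proj1 (bthax f)).
Definition bh_rt {T T' : BTors} (f : BTHom T T') : RTHom (bt_rt T) (bt_rt T') :=
  @Build_RTHom (bt_rt T) (bt_rt T') (bh_right f) (proj2 (bthax f)).

Definition bthom_id (T : BTors) : BTHom T T.
Proof.
  refine {| bthd := @Build_BTHomData T T (fun a => a) (fun b => b) (fun x => x)
                      (fun g => g) (fun h => h) |}.
  split.
  - exact (lthax (lthom_id (bt_lt T))).
  - exact (rthax (rthom_id (bt_rt T))).
Defined.

Definition bthom_comp (T T' T'' : BTors) (g : BTHom T' T'') (f : BTHom T T') : BTHom T T''.
Proof.
  refine {| bthd := @Build_BTHomData T T'' (fun a => bh_A g (bh_A f a))
             (fun b => bh_B g (bh_B f b)) (fun x => bh_X g (bh_X f x))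
             (fun k => bh_G g (bh_G f k)) (fun k => bh_H g (bh_H f k)) |}.
  split.
  - exact (lthax (lthom_comp _ _ _ (bh_lt g) (bh_lt f))).
  - exact (rthax (rthom_comp _ _ _ (bh_rt g) (bh_rt f))).
Defined.

Definition BTCat : Cat :=
  {| Ob := BTors; Hom := BTHom; idm := bthom_id; cmp := bthom_comp |}.

Definition phom_id (P : Pregpd) : PHom P P.
Proof.
  refine {| phd := @Build_PHomData P P (fun a => a) (fun b => b) (fun x => x) |}.
  split; [|split]; try reflexivity.
  intros x y z H1 H2 H1' H2'. simpl.
  rewrite (proof_irrelevance _ H1 H1'), (proof_irrelevance _ H2 H2'). reflexivity.
Defined.

Definition phom_comp (P P' P'' : Pregpd) (g : PHom P' P'') (f : PHom P P') : PHom P P''.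
Proof.
  refine {| phd := @Build_PHomData P P'' (fun a => ph_A g (ph_A f a))
             (fun b => ph_B g (ph_B f b)) (fun x => ph_X g (ph_X f x)) |}.
  destruct f as [f [f1 [f2 f3]]]; destruct g as [g [g1 [g2 g3]]]; unfold phom_ax; cbn.
  split; [|split].
  - intro x. rewrite g1, f1. reflexivity.
  - intro x. rewrite g2, f2. reflexivity.
  - intros x y z H1 H2 H1' H2'.
    assert (K1 : pbe P' (ph_X f x) = pbe P' (ph_X f y)) by (rewrite !f2, H1; reflexivity).
    assert (K2 : pal P' (ph_X f x) = pal P' (ph_X f z)) by (rewrite !f1, H2; reflexivity).
    rewrite (f3 x y z H1 H2 K1 K2). apply g3.
Defined.

Definition PCat : Cat :=
  {| Ob := Pregpd; Hom := PHom; idm := phom_id; cmp := phom_comp |}.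

Definition U_r : Functor BTCat LTCat :=
  {| fo := (bt_lt : Ob BTCat -> Ob LTCat);
     fm := fun (T T' : BTors) (f : BTHom T T') => (bh_lt f : Hom LTCat (bt_lt T) (bt_lt T')) |}.

Definition U_l : Functor BTCat RTCat :=
  {| fo := (bt_rt : Ob BTCat -> Ob RTCat);
     fm := fun (T T' : BTors) (f : BTHom T T') => (bh_rt f : Hom RTCat (bt_rt T) (bt_rt T')) |}.

(* c_l : lTORS -> Pregpd      y x^{-1} z := g . z  where g . x = y      *)

Lemma lt_orbit (T : LTors) (x y : lt_X T) :
  lt_be T x = lt_be T y -> exists g H, lt_act T g x H = y.
Proof. destruct (ltax T) as (_&_&_&_&_&_&Q). apply Q. Qed.

Definition cl_arrow (T : LTors) (x y : lt_X T) (H : lt_be T x = lt_be T y)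
  : {g : arr (lt_G T) | exists H', lt_act T g x H' = y} :=
  constructive_indefinite_description _ (lt_orbit T x y H).

Lemma cl_arrow_d1 (T : LTors) (x y z : lt_X T)
  (s : {g : arr (lt_G T) | exists H', lt_act T g x H' = y})
  (H2 : lt_al T x = lt_al T z) : lt_al T z = d1 (proj1_sig s).
Proof. destruct s as [g Hg]. simpl. destruct Hg as [H' _]. rewrite <- H2. exact H'. Qed.

Definition cl_op (T : LTors) (x y z : lt_X T)
  (H1 : lt_be T x = lt_be T y) (H2 : lt_al T x = lt_al T z) : lt_X T :=
  lt_act T (proj1_sig (cl_arrow T x y H1)) z (cl_arrow_d1 T x y z (cl_arrow T x y H1) H2).

Definition cl_data (T : LTors) : PData :=
  {| pA := lt_A T; pB := lt_B T; pX := lt_X T; pal := lt_al T; pbe := lt_be T;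
     pop := cl_op T |}.

Definition cl_hom_data {T T' : LTors} (f : LTHom T T') : PHomData (cl_data T) (cl_data T') :=
  @Build_PHomData (cl_data T) (cl_data T') (lh_A f) (lh_B f) (lh_X f).

(* the functor c_l, given the facts that the construction is well defined *)
Definition c_l (hcl : forall T : LTors, pregpd_ax (cl_data T))
  (hclm : forall (T T' : LTors) (f : LTHom T T'), phom_ax (cl_hom_data f))
  : Functor LTCat PCat :=
  {| fo := (fun T : LTors => {| pd := cl_data T; pax := hcl T |}) : Ob LTCat -> Ob PCat;
     fm := fun (T T' : LTors) (f : LTHom T T') =>
       (@Build_PHom {| pd := cl_data T; pax := hcl T |} {| pd := cl_data T'; pax := hcl T' |}
          (cl_hom_data f) (hclm T T' f)) |}.

(* c_r : rTORS -> Pregpd      y x^{-1} z := y . h  where x . h = z      *)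

Lemma rt_orbit (T : RTors) (x z : rt_X T) :
  rt_al T x = rt_al T z -> exists h H, rt_act T x h H = z.
Proof. destruct (rtax T) as (_&_&_&_&_&_&Q). apply Q. Qed.

Definition cr_arrow (T : RTors) (x z : rt_X T) (H : rt_al T x = rt_al T z)
  : {h : arr (rt_H T) | exists H', rt_act T x h H' = z} :=
  constructive_indefinite_description _ (rt_orbit T x z H).

Lemma cr_arrow_d0 (T : RTors) (x y z : rt_X T)
  (s : {h : arr (rt_H T) | exists H', rt_act T x h H' = z})
  (H1 : rt_be T x = rt_be T y) : rt_be T y = d0 (proj1_sig s).
Proof. destruct s as [h Hh]. simpl. destruct Hh as [H' _]. rewrite <- H1. exact H'. Qed.

Definition cr_op (T : RTors) (x y z : rt_X T)
  (H1 : rt_be T x = rt_be T y) (H2 : rt_al T x = rt_al T z) : rt_X T :=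
  rt_act T y (proj1_sig (cr_arrow T x z H2)) (cr_arrow_d0 T x y z (cr_arrow T x z H2) H1).

Definition cr_data (T : RTors) : PData :=
  {| pA := rt_A T; pB := rt_B T; pX := rt_X T; pal := rt_al T; pbe := rt_be T;
     pop := cr_op T |}.

Definition cr_hom_data {T T' : RTors} (f : RTHom T T') : PHomData (cr_data T) (cr_data T') :=
  @Build_PHomData (cr_data T) (cr_data T') (rh_A f) (rh_B f) (rh_X f).

Definition c_r (hcr : forall T : RTors, pregpd_ax (cr_data T))
  (hcrm : forall (T T' : RTors) (f : RTHom T T'), phom_ax (cr_hom_data f))
  : Functor RTCat PCat :=
  {| fo := (fun T : RTors => {| pd := cr_data T; pax := hcr T |}) : Ob RTCat -> Ob PCat;
     fm := fun (T T' : RTors) (f : RTHom T T') =>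
       (@Build_PHom {| pd := cr_data T; pax := hcr T |} {| pd := cr_data T'; pax := hcr T' |}
          (cr_hom_data f) (hcrm T T' f)) |}.

Definition quot {T : Type} (R : T -> T -> Prop) : Type := {S : T -> Prop | exists t, S = R t}.
Definition qcls {T : Type} {R : T -> T -> Prop} (t : T) : quot R :=
  exist _ (R t) (ex_intro _ t eq_refl).
Definition qrep {T : Type} {R : T -> T -> Prop} (c : quot R) : T :=
  proj1_sig (constructive_indefinite_description _ (proj2_sig c)).

Section Env.
Variable P : Pregpd.

Lemma p_op (x y z : pX P) H1 H2 :
  pal P (pop P x y z H1 H2) = pal P y /\ pbe P (pop P x y z H1 H2) = pbe P z.
Proof. destruct (pax P) as (_&_&_&Q&_). apply Q. Qed.

Definition pick_al (a : pA P) : pX P :=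
  proj1_sig (constructive_indefinite_description _ (proj1 (proj2 (pax P)) a)).
Definition pick_be (b : pB P) : pX P :=
  proj1_sig (constructive_indefinite_description _ (proj1 (proj2 (proj2 (pax P))) b)).

(* pairs (x,y) with be x = be y ; the class of (x,y) is  y x^{-1} *)
Definition TR : Type := {p : pX P * pX P | pbe P (fst p) = pbe P (snd p)}.
Definition RR (p q : TR) : Prop :=
  exists H : pal P (fst (proj1_sig p)) = pal P (fst (proj1_sig q)),
    snd (proj1_sig q) =
      pop P (fst (proj1_sig p)) (snd (proj1_sig p)) (fst (proj1_sig q)) (proj2_sig p) H.
Definition XXinv : Type := quot RR.

(* pairs (x,z) with al x = al z ; the class of (x,z) is  x^{-1} z *)
Definition TL : Type := {p : pX P * pX P | pal P (fst p) = pal P (snd p)}.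
Definition RL (p q : TL) : Prop :=
  exists H : pbe P (fst (proj1_sig p)) = pbe P (fst (proj1_sig q)),
    snd (proj1_sig q) =
      pop P (fst (proj1_sig p)) (fst (proj1_sig q)) (snd (proj1_sig p)) H (proj2_sig p).
Definition XinvX : Type := quot RL.

(* the groupoid X^+(A,A) = XX^{-1}:  y x^{-1} : al y -> al x *)
Definition rx (c : XXinv) : pX P := fst (proj1_sig (qrep c)).
Definition ry (c : XXinv) : pX P := snd (proj1_sig (qrep c)).
Definition rxy (c : XXinv) : pbe P (rx c) = pbe P (ry c) := proj2_sig (qrep c).

Definition GLcomp (c1 c2 : XXinv) (H : pal P (rx c1) = pal P (ry c2)) : XXinv :=
  (* (x1 x2^{-1}) o (x3 x4^{-1}) = (x1 x2^{-1} x3) x4^{-1} *)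
  qcls (exist (fun p : pX P * pX P => pbe P (fst p) = pbe P (snd p))
          (rx c2, pop P (rx c1) (ry c1) (ry c2) (rxy c1) H)
          (eq_trans (rxy c2) (eq_sym (proj2 (p_op (rx c1) (ry c1) (ry c2) (rxy c1) H))))).

Definition GL : GpdData (pA P) :=
  {| arr := XXinv;
     d0 := fun c => pal P (ry c);
     d1 := fun c => pal P (rx c);
     idn := fun a => qcls (exist (fun p : pX P * pX P => pbe P (fst p) = pbe P (snd p))
                             (pick_al a, pick_al a) eq_refl);
     gcomp := GLcomp |}.

(* left action  (y x^{-1}) . z = y x^{-1} z *)
Definition lactL (c : arr GL) (z : pX P) (H : pal P z = d1 c) : pX P :=
  pop P (rx c) (ry c) z (rxy c) (eq_sym H).

(* the groupoid X^+(B,B) = X^{-1}X:  x^{-1} z : be x -> be z *)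
Definition lx (c : XinvX) : pX P := fst (proj1_sig (qrep c)).
Definition lz (c : XinvX) : pX P := snd (proj1_sig (qrep c)).
Definition lxz (c : XinvX) : pal P (lx c) = pal P (lz c) := proj2_sig (qrep c).

Definition GRcomp (c1 c2 : XinvX) (H : pbe P (lz c1) = pbe P (lx c2)) : XinvX :=
  (* (x2^{-1} x3) o (x4^{-1} x5) = x2^{-1} (x3 x4^{-1} x5) *)
  qcls (exist (fun p : pX P * pX P => pal P (fst p) = pal P (snd p))
          (lx c1, pop P (lx c2) (lz c1) (lz c2) (eq_sym H) (lxz c2))
          (eq_trans (lxz c1) (eq_sym (proj1 (p_op (lx c2) (lz c1) (lz c2) (eq_sym H) (lxz c2)))))).

Definition GR : GpdData (pB P) :=
  {| arr := XinvX;
     d0 := fun c => pbe P (lx c);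
     d1 := fun c => pbe P (lz c);
     idn := fun b => qcls (exist (fun p : pX P * pX P => pal P (fst p) = pal P (snd p))
                             (pick_be b, pick_be b) eq_refl);
     gcomp := GRcomp |}.

(* right action  w . (x^{-1} z) = w x^{-1} z *)
Definition ractR (w : pX P) (c : arr GR) (H : pbe P w = d0 c) : pX P :=
  pop P (lx c) w (lz c) (eq_sym H) (lxz c).

Definition env_data : BTData :=
  {| bt_A := pA P; bt_B := pB P; bt_X := pX P; bt_al := pal P; bt_be := pbe P;
     bt_G := GL; bt_H := GR; bt_lact := lactL; bt_ract := ractR |}.

End Env.

Definition env_hom_data {P P' : Pregpd} (f : PHom P P') : BTHomData (env_data P) (env_data P').
Proof.
  refine (@Build_BTHomData (env_data P) (env_data P') (ph_A f) (ph_B f) (ph_X f) _ _).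
  -
    intro c. apply qcls.
    exists (ph_X f (rx P c), ph_X f (ry P c)). simpl.
    destruct (phax f) as [fa [fb _]]. rewrite !fb. apply f_equal. exact (rxy P c).
  -
    intro c. apply qcls.
    exists (ph_X f (lx P c), ph_X f (lz P c)). simpl.
    destruct (phax f) as [fa [fb _]]. rewrite !fa. apply f_equal. exact (lxz P c).
Defined.

Definition env (henv : forall P : Pregpd, btors_ax (env_data P))
  (henvm : forall (P P' : Pregpd) (f : PHom P P'), bthom_ax (env_hom_data f))
  : Functor PCat BTCat :=
  {| fo := (fun P : Pregpd => {| btd := env_data P; btax := henv P |}) : Ob PCat -> Ob BTCat;
     fm := fun (P P' : Pregpd) (f : PHom P P') =>
       (@Build_BTHom {| btd := env_data P; btax := henv P |} {| btd := env_data P'; btax := henv P' |}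
          (env_hom_data f) (henvm P P' f)) |}.

(* In a left G-torsor the arrow taking x to y is unique, so y x^-1 z := g z is well defined,
   and G is recovered from the resulting pregroupoid as its groupoid XX^-1: the class of
   (x, g x) corresponds to g.  This identification is natural in the torsor and respects
   the actions, which gives the natural isomorphisms (iv); symmetrically on the right with
   X^-1 X.  Conversely, in the enveloping bitorsor of a pregroupoid the class y x^-1 is
   itself the arrow taking x to y, so c_l (and likewise c_r) returns the pregroupoid on
   the nose, which is (iii).  In a bitorsor the two actions commute, so with g x = y and
   x h = z both constructions give g z = g (x h) = (g x) h = y h, which is (ii).  The five
   equivalences (i) follow, env providing the quasi-inverses. *)

From Stdlib Require Import ClassicalEpsilon ProofIrrelevance FunctionalExtensionality
  PropExtensionality.

(** * Total forms of the partial operations *)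

(* Rewriting with total extensions is not blocked by the domain proofs the partial
   operations carry; off their domains they return junk. *)
Definition assuming {Q : Prop} {T : Type} (f : Q -> T) (d : T) : T :=
  match excluded_middle_informative Q with left q => f q | right _ => d end.

Lemma assumingE {Q : Prop} {T : Type} (f : Q -> T) d (q : Q) : assuming f d = f q.
Proof.
  unfold assuming. destruct (excluded_middle_informative Q) as [q'|n].
  - f_equal; apply proof_irrelevance.
  - contradiction.
Qed.

Lemma exist_eq {A : Type} (P : A -> Prop) a b (pa : P a) (pb : P b) :
  a = b -> exist P a pa = exist P b pb.
Proof. intros ->. f_equal. apply proof_irrelevance. Qed.

Section PregroupoidLaws.
Variable P : PData.
Hypothesis hP : pregpd_ax P.
Local Notation al := (pal P).
Local Notation be := (pbe P).

Definition tern (x y z : pX P) : pX P :=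
  assuming (fun H1 : be x = be y => assuming (fun H2 : al x = al z => pop P x y z H1 H2) x) x.

Lemma ternE x y z H1 H2 : pop P x y z H1 H2 = tern x y z.
Proof. unfold tern. rewrite (assumingE _ _ H1), (assumingE _ _ H2). reflexivity. Qed.

Lemma tern_al x y z : be x = be y -> al x = al z -> al (tern x y z) = al y.
Proof. intros H1 H2. rewrite <- (ternE x y z H1 H2). apply hP. Qed.

Lemma tern_be x y z : be x = be y -> al x = al z -> be (tern x y z) = be z.
Proof. intros H1 H2. rewrite <- (ternE x y z H1 H2). apply hP. Qed.

Lemma tern_id_l x z : al x = al z -> tern x x z = z.
Proof. intro H2. rewrite <- (ternE x x z eq_refl H2). apply hP. Qed.

Lemma tern_id_r x y : be x = be y -> tern x y x = y.
Proof. intro H1. rewrite <- (ternE x y x H1 eq_refl). apply hP. Qed.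

Lemma tern_comp_l x y z v : be x = be y -> al x = al z -> be y = be v ->
  tern y v (tern x y z) = tern x v z.
Proof.
  intros H1 H2 H3. destruct hP as (_&_&_&_&_&_&comp_l&_).
  assert (H4 : al y = al (pop P x y z H1 H2)) by (rewrite ternE, tern_al; auto).
  assert (H5 : be x = be v) by congruence.
  pose proof (comp_l x y z v H1 H2 H3 H4 H5 H2) as E. rewrite !ternE in E. exact E.
Qed.

Lemma tern_comp_r x y z w : be x = be y -> al x = al z -> al z = al w ->
  tern z (tern x y z) w = tern x y w.
Proof.
  intros H1 H2 H4. destruct hP as (_&_&_&_&_&_&_&comp_r).
  assert (H3 : be z = be (pop P x y z H1 H2)) by (rewrite ternE, tern_be; auto).
  assert (H6 : al x = al w) by congruence.
  pose proof (comp_r x y z w H1 H2 H3 H4 H1 H6) as E. rewrite !ternE in E. exact E.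
Qed.

Lemma tern_assoc x y z u w : be u = be z -> al u = al w -> be x = be y -> al x = al z ->
  tern u (tern x y z) w = tern x y (tern u z w).
Proof.
  intros H1 H2 H3 H4.
  assert (E1 : al z = al (tern u z w)) by (rewrite tern_al; auto).
  rewrite <- (tern_comp_r x y z (tern u z w)); auto.
  rewrite tern_comp_l; auto. rewrite tern_be; auto.
Qed.

End PregroupoidLaws.

#[global] Hint Resolve pax : core.

Ltac tern_side := cbn in *;
  first [ exact (pax _) | congruence | rewrite tern_be; tern_side | rewrite tern_al; tern_side ].

Section GroupoidLaws.
Variables (A : Type) (G : GpdData A).
Hypothesis hG : gpd_ax G.

Definition tcomp (f g : arr G) : arr G := assuming (fun H : d1 f = d0 g => gcomp f g H) f.

Lemma tcompE f g H : gcomp f g H = tcomp f g.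
Proof. unfold tcomp. rewrite (assumingE _ _ H). reflexivity. Qed.

Lemma tcomp_d0 f g : d1 f = d0 g -> d0 (tcomp f g) = d0 f.
Proof. intro H. rewrite <- (tcompE f g H). apply hG. Qed.

Lemma tcomp_d1 f g : d1 f = d0 g -> d1 (tcomp f g) = d1 g.
Proof. intro H. rewrite <- (tcompE f g H). apply hG. Qed.

Lemma idn_d0 a : d0 (idn G a) = a.
Proof. apply hG. Qed.

Lemma idn_d1 a : d1 (idn G a) = a.
Proof. apply hG. Qed.

End GroupoidLaws.
Arguments tcomp {A} G f g.

(** * The pregroupoids of a torsor *)

Section LeftTorsor.
Variable T : LTors.
Local Notation al := (lt_al T).
Local Notation be := (lt_be T).
Local Notation G := (lt_G T).

Definition lact (g : arr G) (x : lt_X T) : lt_X T :=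
  assuming (fun H : al x = d1 g => lt_act T g x H) x.

Lemma lactE g x H : lt_act T g x H = lact g x.
Proof. unfold lact. rewrite (assumingE _ _ H). reflexivity. Qed.

Lemma lt_gpd : gpd_ax G.
Proof. apply (ltax T). Qed.

Lemma lt_inhabited : inhabited (lt_X T).
Proof. apply (ltax T). Qed.

Lemma lt_surj_al : surj al.
Proof. apply (ltax T). Qed.

Lemma lt_surj_be : surj be.
Proof. apply (ltax T). Qed.

Lemma lact_al g x : al x = d1 g -> al (lact g x) = d0 g.
Proof. intro H. rewrite <- (lactE g x H). apply (ltax T). Qed.

Lemma lact_idn a x : al x = a -> lact (idn G a) x = x.
Proof.
  intros <-. assert (H : al x = d1 (idn G (al x))) by (rewrite idn_d1; auto; apply lt_gpd).
  rewrite <- (lactE _ x H). apply (ltax T).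
Qed.

Lemma lact_comp g h x : al x = d1 h -> d1 g = d0 h ->
  lact g (lact h x) = lact (tcomp G g h) x.
Proof.
  intros H1 H3. destruct (ltax T) as (hG&(_&_&assoc)&_).
  assert (H2 : al (lt_act T h x H1) = d1 g) by (rewrite lactE, lact_al; auto).
  assert (H4 : al x = d1 (gcomp g h H3)) by (rewrite tcompE, tcomp_d1; auto).
  pose proof (assoc g h x H1 H2 H3 H4) as E. rewrite !lactE, tcompE in E. exact E.
Qed.

Lemma lact_inj g g' x : al x = d1 g -> al x = d1 g' -> lact g x = lact g' x -> g = g'.
Proof.
  intros H H' E. rewrite <- (lactE g x H), <- (lactE g' x H') in E.
  destruct (ltax T) as (_&_&_&_&free&_). exact (free _ _ _ _ _ E).
Qed.

Lemma lt_orbitP x y : be x = be y <-> exists g, al x = d1 g /\ lact g x = y.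
Proof.
  destruct (ltax T) as (_&_&_&_&_&_&orbit). rewrite orbit. split.
  - intros (g&H&E). exists g. rewrite <- (lactE _ _ H). auto.
  - intros (g&H&E). exists g, H. rewrite lactE. auto.
Qed.

Lemma lact_be g x : al x = d1 g -> be (lact g x) = be x.
Proof. intro H. symmetry. apply lt_orbitP. eauto. Qed.

Lemma cl_tern x y z g : al x = d1 g -> lact g x = y -> al x = al z ->
  tern (cl_data T) x y z = lact g z.
Proof.
  intros Hg Ey Hz.
  assert (H1 : be x = be y) by (apply lt_orbitP; eauto).
  rewrite <- (ternE (cl_data T) x y z H1 Hz). cbn. unfold cl_op.
  rewrite lactE. destruct (cl_arrow T x y H1) as [g0 [H0 E0]]. cbn.
  rewrite lactE in E0. f_equal. apply (lact_inj _ _ x); congruence.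
Qed.

Lemma cl_pregpd : pregpd_ax (cl_data T).
Proof.
  pose proof lt_gpd as hG.
  split; [exact lt_inhabited|]. split; [exact lt_surj_al|]. split; [exact lt_surj_be|].
  split; [|split; [|split; [|split]]].
  - intros x y z H1 H2. rewrite ternE. cbn [pal pbe cl_data] in *.
    destruct (proj1 (lt_orbitP x y) H1) as (g&Hg&Eg).
    rewrite (cl_tern x y z g), lact_be, lact_al by congruence.
    rewrite <- Eg, lact_al; auto.
  - intros x z H1 H2. rewrite ternE. cbn [pal pbe cl_data] in *.
    rewrite (cl_tern x x z (idn G (al x))); rewrite ?lact_idn, ?idn_d1; auto.
  - intros x y H1 H2. rewrite ternE. cbn [pal pbe cl_data] in *.
    destruct (proj1 (lt_orbitP x y) H1) as (g&Hg&Eg).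
    rewrite (cl_tern x y x g); auto.
  - intros x y z v H1 H2 H3 H4 H5 H6. rewrite !ternE. cbn [pal pbe cl_data] in *.
    destruct (proj1 (lt_orbitP x y) H1) as (g&Hg&Eg).
    destruct (proj1 (lt_orbitP y v) H3) as (h&Hh&Eh).
    assert (Hy : al y = d0 g) by (rewrite <- Eg, lact_al; auto).
    rewrite (cl_tern x y z g), (cl_tern y v (lact g z) h); auto.
    + rewrite (cl_tern x v z (tcomp G h g)); auto.
      * apply lact_comp; congruence.
      * rewrite tcomp_d1; congruence.
      * rewrite <- lact_comp; congruence.
    + rewrite lact_al; congruence.
  - intros x y z w H1 H2 H3 H4 H5 H6. rewrite !ternE. cbn [pal pbe cl_data] in *.
    destruct (proj1 (lt_orbitP x y) H1) as (g&Hg&Eg).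
    rewrite (cl_tern x y z g), (cl_tern z (lact g z) w g), (cl_tern x y w g); congruence.
Qed.

End LeftTorsor.

Lemma lthom_lact {T T' : LTors} (f : LTHom T T') g x : lt_al T x = d1 g ->
  lh_X f (lact T g x) = lact T' (lh_G f g) (lh_X f x).
Proof.
  intro H. destruct (lthax f) as ((F1&_)&F2&_&F4).
  assert (H' : lt_al T' (lh_X f x) = d1 (lh_G f g)) by (rewrite F2, H; symmetry; apply F1).
  rewrite <- (lactE T g x H), <- (lactE T' _ _ H'). apply F4.
Qed.

Lemma cl_phom (T T' : LTors) (f : LTHom T T') : phom_ax (cl_hom_data f).
Proof.
  destruct (lthax f) as ((F1&_)&F2&F3&_).
  split; [exact F2|]. split; [exact F3|].
  intros x y z H1 H2 H1' H2'. rewrite !ternE. cbn in *.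
  destruct (proj1 (lt_orbitP T x y) H1) as (g&Hg&Eg).
  rewrite (cl_tern T x y z g), lthom_lact by congruence.
  symmetry. apply cl_tern; auto.
  - rewrite F2, Hg. symmetry. apply F1.
  - rewrite <- lthom_lact; congruence.
Qed.

Section RightTorsor.
Variable T : RTors.
Local Notation al := (rt_al T).
Local Notation be := (rt_be T).
Local Notation H := (rt_H T).

Definition ract (x : rt_X T) (h : arr H) : rt_X T :=
  assuming (fun E : be x = d0 h => rt_act T x h E) x.

Lemma ractE x h E : rt_act T x h E = ract x h.
Proof. unfold ract. rewrite (assumingE _ _ E). reflexivity. Qed.

Lemma rt_gpd : gpd_ax H.
Proof. apply (rtax T). Qed.

Lemma rt_inhabited : inhabited (rt_X T).
Proof. apply (rtax T). Qed.

Lemma rt_surj_al : surj al.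
Proof. apply (rtax T). Qed.

Lemma rt_surj_be : surj be.
Proof. apply (rtax T). Qed.

Lemma ract_be x h : be x = d0 h -> be (ract x h) = d1 h.
Proof. intro E. rewrite <- (ractE x h E). apply (rtax T). Qed.

Lemma ract_idn b x : be x = b -> ract x (idn H b) = x.
Proof.
  intros <-. assert (E : be x = d0 (idn H (be x))) by (rewrite idn_d0; auto; apply rt_gpd).
  rewrite <- (ractE x _ E). apply (rtax T).
Qed.

Lemma ract_comp x h k : be x = d0 h -> d1 h = d0 k ->
  ract (ract x h) k = ract x (tcomp H h k).
Proof.
  intros H1 H3. destruct (rtax T) as (hG&(_&_&assoc)&_).
  assert (H2 : be (rt_act T x h H1) = d0 k) by (rewrite ractE, ract_be; auto).
  assert (H4 : be x = d0 (gcomp h k H3)) by (rewrite tcompE, tcomp_d0; auto).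
  pose proof (assoc x h k H1 H2 H3 H4) as E. rewrite !ractE, tcompE in E. exact E.
Qed.

Lemma ract_inj h h' x : be x = d0 h -> be x = d0 h' -> ract x h = ract x h' -> h = h'.
Proof.
  intros E1 E2 E. rewrite <- (ractE x h E1), <- (ractE x h' E2) in E.
  destruct (rtax T) as (_&_&_&_&free&_). exact (free _ _ _ _ _ E).
Qed.

Lemma rt_orbitP x y : al x = al y <-> exists h, be x = d0 h /\ ract x h = y.
Proof.
  destruct (rtax T) as (_&_&_&_&_&_&orbit). rewrite orbit. split.
  - intros (h&E&E'). exists h. rewrite <- (ractE _ _ E). auto.
  - intros (h&E&E'). exists h, E. rewrite ractE. auto.
Qed.

Lemma ract_al x h : be x = d0 h -> al (ract x h) = al x.
Proof. intro E. symmetry. apply rt_orbitP. eauto. Qed.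

Lemma cr_tern x y z h : be x = d0 h -> ract x h = z -> be x = be y ->
  tern (cr_data T) x y z = ract y h.
Proof.
  intros Hh Ez Hy.
  assert (H2 : al x = al z) by (apply rt_orbitP; eauto).
  rewrite <- (ternE (cr_data T) x y z Hy H2). cbn. unfold cr_op.
  rewrite ractE. destruct (cr_arrow T x z H2) as [h0 [H0 E0]]. cbn.
  rewrite ractE in E0. f_equal. apply (ract_inj _ _ x); congruence.
Qed.

Lemma cr_pregpd : pregpd_ax (cr_data T).
Proof.
  pose proof rt_gpd as hG.
  split; [exact rt_inhabited|]. split; [exact rt_surj_al|]. split; [exact rt_surj_be|].
  split; [|split; [|split; [|split]]].
  - intros x y z H1 H2. rewrite ternE. cbn [pal pbe cr_data] in *.
    destruct (proj1 (rt_orbitP x z) H2) as (h&Hh&Eh).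
    rewrite (cr_tern x y z h), ract_al, ract_be by congruence.
    rewrite <- Eh, ract_be; auto.
  - intros x z H1 H2. rewrite ternE. cbn [pal pbe cr_data] in *.
    destruct (proj1 (rt_orbitP x z) H2) as (h&Hh&Eh).
    rewrite (cr_tern x x z h); auto.
  - intros x y H1 H2. rewrite ternE. cbn [pal pbe cr_data] in *.
    rewrite (cr_tern x y x (idn H (be x))); rewrite ?ract_idn, ?idn_d0; auto.
  - intros x y z v H1 H2 H3 H4 H5 H6. rewrite !ternE. cbn [pal pbe cr_data] in *.
    destruct (proj1 (rt_orbitP x z) H2) as (h&Hh&Eh).
    rewrite (cr_tern x y z h), (cr_tern y v (ract y h) h), (cr_tern x v z h); congruence.
  - intros x y z w H1 H2 H3 H4 H5 H6. rewrite !ternE. cbn [pal pbe cr_data] in *.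
    destruct (proj1 (rt_orbitP x z) H2) as (h&Hh&Eh).
    destruct (proj1 (rt_orbitP z w) H4) as (k&Hk&Ek).
    assert (Hz : be z = d1 h) by (rewrite <- Eh, ract_be; auto).
    rewrite (cr_tern x y z h), (cr_tern z (ract y h) w k); auto.
    + rewrite ract_comp by congruence.
      rewrite (cr_tern x y w (tcomp H h k)); auto.
      * rewrite tcomp_d0; congruence.
      * rewrite <- ract_comp; congruence.
    + rewrite ract_be; congruence.
Qed.

End RightTorsor.

Lemma rthom_ract {T T' : RTors} (f : RTHom T T') x h : rt_be T x = d0 h ->
  rh_X f (ract T x h) = ract T' (rh_X f x) (rh_H f h).
Proof.
  intro E. destruct (rthax f) as ((F1&_)&F2&F3&F4).
  assert (E' : rt_be T' (rh_X f x) = d0 (rh_H f h)) by (rewrite F3, E; symmetry; apply F1).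
  rewrite <- (ractE T x h E), <- (ractE T' _ _ E'). apply F4.
Qed.

Lemma cr_phom (T T' : RTors) (f : RTHom T T') : phom_ax (cr_hom_data f).
Proof.
  destruct (rthax f) as ((F1&_)&F2&F3&_).
  split; [exact F2|]. split; [exact F3|].
  intros x y z H1 H2 H1' H2'. rewrite !ternE. cbn in *.
  destruct (proj1 (rt_orbitP T x z) H2) as (h&Hh&Eh).
  rewrite (cr_tern T x y z h), rthom_ract by congruence.
  symmetry. apply cr_tern; auto.
  - rewrite F3, Hh. symmetry. apply F1.
  - rewrite <- rthom_ract; congruence.
Qed.

(** * The enveloping bitorsor *)

Section Quotient.
Variables (T : Type) (R : T -> T -> Prop).
Hypothesis R_refl : forall t, R t t.
Hypothesis R_sym : forall t u, R t u -> R u t.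
Hypothesis R_trans : forall t u v, R t u -> R u v -> R t v.

Lemma qcls_eq t u : R t u -> @qcls T R t = qcls u.
Proof.
  intro H. apply exist_eq, functional_extensionality. intro v.
  apply propositional_extensionality. split; eauto.
Qed.

Lemma qcls_inv t u : @qcls T R t = qcls u -> R t u.
Proof. intro E. apply (f_equal (@proj1_sig _ _)) in E. cbn in E. rewrite E. apply R_refl. Qed.

Lemma qcls_qrep (c : quot R) : qcls (qrep c) = c.
Proof.
  destruct c as [S HS]. unfold qrep. cbn.
  destruct (constructive_indefinite_description _ HS) as [t Ht]. cbn.
  apply exist_eq. symmetry. exact Ht.
Qed.

End Quotient.

Notation clsR P x y H := (@qcls (TR P) (RR P) (exist _ (x, y) H)).
Notation clsL P x z H := (@qcls (TL P) (RL P) (exist _ (x, z) H)).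

Section EnvelopeLeft.
Variable P : Pregpd.
Local Notation al := (pal P).
Local Notation be := (pbe P).

Lemma pick_al_spec a : al (pick_al P a) = a.
Proof. unfold pick_al. destruct (constructive_indefinite_description _ _) as [x Hx]. exact Hx. Qed.

Lemma RR_iff (p q : TR P) : RR P p q <->
  al (fst (proj1_sig p)) = al (fst (proj1_sig q)) /\
  snd (proj1_sig q) = tern P (fst (proj1_sig p)) (snd (proj1_sig p)) (fst (proj1_sig q)).
Proof.
  unfold RR. split.
  - intros [H E]. split; auto. rewrite E, ternE. reflexivity.
  - intros [H E]. exists H. rewrite E, ternE. reflexivity.
Qed.

Lemma RR_refl p : RR P p p.
Proof. apply RR_iff. destruct p as [[x y] H]; cbn in *. rewrite tern_id_r; auto. Qed.

Lemma RR_sym p q : RR P p q -> RR P q p.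
Proof.
  rewrite !RR_iff. destruct p as [[x y] H], q as [[x' y'] H']; cbn in *.
  intros [E1 ->]. split; auto. rewrite tern_comp_r, tern_id_r; auto.
Qed.

Lemma RR_trans p q r : RR P p q -> RR P q r -> RR P p r.
Proof.
  rewrite !RR_iff. destruct p as [[x y] H], q as [[x' y'] H'], r as [[x'' y''] H'']; cbn in *.
  intros [E1 E2] [E3 E4]. split; [congruence|]. subst. rewrite tern_comp_r; auto.
Qed.

Lemma clsR_eq x y x' y' (H : be x = be y) (H' : be x' = be y') :
  al x = al x' -> y' = tern P x y x' -> clsR P x y H = clsR P x' y' H'.
Proof.
  intros E1 E2. apply qcls_eq; [exact RR_sym|exact RR_trans|]. apply RR_iff. auto.
Qed.

Lemma clsR_congr x y y' H H' : y = y' -> clsR P x y H = clsR P x y' H'.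
Proof. intros <-. do 2 f_equal. apply proof_irrelevance. Qed.

Lemma clsR_inv x y x' y' (H : be x = be y) (H' : be x' = be y') :
  clsR P x y H = clsR P x' y' H' -> al x = al x' /\ y' = tern P x y x'.
Proof. intro E. apply qcls_inv in E; [|exact RR_refl]. apply RR_iff in E. exact E. Qed.

Lemma XXinv_rep (c : XXinv P) : c = clsR P (rx P c) (ry P c) (rxy P c).
Proof.
  unfold rx, ry, rxy. rewrite <- (qcls_qrep _ _ c) at 1.
  destruct (qrep c) as [[a b] pf]. reflexivity.
Qed.

Lemma XXinv_ind (Q : XXinv P -> Prop) : (forall x y H, Q (clsR P x y H)) -> forall c, Q c.
Proof. intros K c. rewrite (XXinv_rep c). apply K. Qed.

Lemma rx_clsR x y H :
  al (rx P (clsR P x y H)) = al x /\ ry P (clsR P x y H) = tern P x y (rx P (clsR P x y H)).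
Proof. destruct (clsR_inv _ _ _ _ _ _ (XXinv_rep (clsR P x y H))). auto. Qed.

Lemma GL_d0 x y H : @d0 _ (GL P) (clsR P x y H) = al y.
Proof. cbn. destruct (rx_clsR x y H) as [E1 ->]. rewrite tern_al; auto. Qed.

Lemma GL_d1 x y H : @d1 _ (GL P) (clsR P x y H) = al x.
Proof. apply rx_clsR. Qed.

Lemma GL_idn a p : al p = a -> idn (GL P) a = clsR P p p eq_refl.
Proof.
  intro E. apply clsR_eq; cbn; [|rewrite tern_id_l]; rewrite ?pick_al_spec; auto.
Qed.

Lemma GL_gcomp c1 c2 H x1 y1 H1 x2 y2 H2 H' :
  c1 = clsR P x1 y1 H1 -> c2 = clsR P x2 y2 H2 ->
  @gcomp _ (GL P) c1 c2 H = clsR P x2 (tern P x1 y1 y2) H'.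
Proof.
  intros -> ->. cbn. unfold GLcomp. symmetry.
  destruct (rx_clsR x1 y1 H1) as [E1 E2], (rx_clsR x2 y2 H2) as [E3 E4].
  apply clsR_eq; cbn; auto. rewrite ternE.
  cbn in H. revert H. rewrite E2, E4.
  set (r1 := rx P (clsR P x1 y1 H1)) in *. set (r2 := rx P (clsR P x2 y2 H2)) in *.
  clearbody r1 r2. intro H.
  assert (Hal : al x1 = al y2) by (rewrite <- E1, H, tern_al; auto).
  rewrite tern_comp_r, tern_assoc; auto; congruence.
Qed.

Lemma lactL_clsR c x y H z Hz : c = clsR P x y H -> lactL P c z Hz = tern P x y z.
Proof.
  intros ->. unfold lactL. rewrite ternE. destruct (rx_clsR x y H) as [E1 E2].
  cbn in Hz. rewrite E2, tern_comp_r; auto; congruence.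
Qed.

End EnvelopeLeft.

Section EnvelopeLeftGroupoid.
Variable P : Pregpd.
Local Notation al := (pal P).
Local Notation be := (pbe P).
Local Notation GL := (GL P).

Lemma GL_idn_ends a : d0 (idn GL a) = a /\ d1 (idn GL a) = a.
Proof.
  rewrite (GL_idn P a (pick_al P a) (pick_al_spec P a)), GL_d0, GL_d1, pick_al_spec. auto.
Qed.

Lemma GL_gcomp_ends (f g : arr GL) (H : d1 f = d0 g) :
  d0 (gcomp f g H) = d0 f /\ d1 (gcomp f g H) = d1 g.
Proof.
  revert H. induction f as [x y Hf] using XXinv_ind. induction g as [x' y' Hg] using XXinv_ind.
  intro H. pose proof H as K. rewrite GL_d1, GL_d0 in K.
  assert (H' : be x' = be (tern P x y y')) by tern_side.
  rewrite (GL_gcomp P _ _ H x y Hf x' y' Hg H') by reflexivity.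
  rewrite !GL_d0, !GL_d1. split; tern_side.
Qed.

Lemma GL_gcomp_idn_l (f : arr GL) (H : d1 (idn GL (d0 f)) = d0 f) : gcomp (idn GL (d0 f)) f H = f.
Proof.
  revert H. induction f as [x y Hf] using XXinv_ind. intro H.
  assert (Hq : be x = be (tern P y y y)) by tern_side.
  rewrite (GL_gcomp P _ _ H y y eq_refl x y Hf Hq); [| |reflexivity].
  - apply clsR_congr, tern_id_l; auto.
  - rewrite GL_d0. apply GL_idn; auto.
Qed.

Lemma GL_gcomp_idn_r (f : arr GL) (H : d1 f = d0 (idn GL (d1 f))) : gcomp f (idn GL (d1 f)) H = f.
Proof.
  revert H. induction f as [x y Hf] using XXinv_ind. intro H.
  assert (Hq : be x = be (tern P x y x)) by tern_side.
  rewrite (GL_gcomp P _ _ H x y Hf x x eq_refl Hq); [|reflexivity|].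
  - apply clsR_congr, tern_id_r; auto.
  - rewrite GL_d1. apply GL_idn; auto.
Qed.

Lemma GL_gcomp_assoc (f g h : arr GL) (H1 : d1 f = d0 g) (H2 : d1 (gcomp f g H1) = d0 h)
  (H3 : d1 g = d0 h) (H4 : d1 f = d0 (gcomp g h H3)) :
  gcomp (gcomp f g H1) h H2 = gcomp f (gcomp g h H3) H4.
Proof.
  revert H1 H2 H3 H4. induction f as [x y Hf] using XXinv_ind.
  induction g as [x' y' Hg] using XXinv_ind. induction h as [x'' y'' Hh] using XXinv_ind.
  intros H1 H2 H3 H4.
  pose proof H1 as K1. rewrite GL_d1, GL_d0 in K1.
  pose proof H3 as K3. rewrite GL_d1, GL_d0 in K3.
  assert (E1 : be x' = be (tern P x y y')) by tern_side.
  assert (E2 : be x'' = be (tern P x' y' y'')) by tern_side.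
  assert (E3 : be x'' = be (tern P x' (tern P x y y') y'')) by tern_side.
  assert (E4 : be x'' = be (tern P x y (tern P x' y' y''))) by tern_side.
  rewrite (GL_gcomp P _ _ H2 x' (tern P x y y') E1 x'' y'' Hh E3)
    by (reflexivity || eapply GL_gcomp; reflexivity).
  rewrite (GL_gcomp P _ _ H4 x y Hf x'' (tern P x' y' y'') E2 E4)
    by (reflexivity || eapply GL_gcomp; reflexivity).
  apply clsR_congr, tern_assoc; tern_side.
Qed.

Lemma GL_inv (f : arr GL) : exists (g : arr GL) (H1 : d1 f = d0 g) (H2 : d1 g = d0 f),
  gcomp f g H1 = idn GL (d0 f) /\ gcomp g f H2 = idn GL (d1 f).
Proof.
  induction f as [x y H] using XXinv_ind. exists (clsR P y x (eq_sym H)).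
  assert (Q1 : @d1 _ GL (clsR P x y H) = @d0 _ GL (clsR P y x (eq_sym H)))
    by (rewrite GL_d1, GL_d0; auto).
  assert (Q2 : @d1 _ GL (clsR P y x (eq_sym H)) = @d0 _ GL (clsR P x y H))
    by (rewrite GL_d1, GL_d0; auto).
  exists Q1, Q2. rewrite GL_d0, GL_d1, (GL_idn P (al y) y), (GL_idn P (al x) x) by auto. split.
  - assert (Hq : be y = be (tern P x y x)) by tern_side.
    rewrite (GL_gcomp P _ _ Q1 x y H y x (eq_sym H) Hq) by reflexivity.
    apply clsR_congr, tern_id_r; auto.
  - assert (Hq : be x = be (tern P y x y)) by tern_side.
    rewrite (GL_gcomp P _ _ Q2 y x (eq_sym H) x y H Hq) by reflexivity.
    apply clsR_congr, tern_id_r; auto.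
Qed.

Lemma GL_gpd : gpd_ax GL.
Proof.
  split; [destruct (pax P) as ([x]&_); exact (inhabits (al x))|].
  exact (conj GL_idn_ends (conj GL_gcomp_ends (conj GL_gcomp_idn_l
    (conj GL_gcomp_idn_r (conj GL_gcomp_assoc GL_inv))))).
Qed.

Lemma GL_lact_ax : lact_ax al GL (lactL P).
Proof.
  split; [|split].
  - intros g. induction g as [x y Hg] using XXinv_ind. intros z Hz.
    rewrite (lactL_clsR P _ x y Hg) by reflexivity. rewrite GL_d0.
    rewrite GL_d1 in Hz. tern_side.
  - intros x Hx. rewrite (lactL_clsR P _ x x eq_refl); [apply tern_id_l; auto|].
    apply GL_idn; auto.
  - intros g h. induction g as [x1 y1 K1] using XXinv_ind.
    induction h as [x2 y2 K2] using XXinv_ind.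
    intros z Q1 Q2 Q3 Q4.
    pose proof Q1 as E1. rewrite GL_d1 in E1. pose proof Q3 as E3. rewrite GL_d1, GL_d0 in E3.
    assert (Hq : be x2 = be (tern P x1 y1 y2)) by tern_side.
    rewrite !(lactL_clsR P _ _ _ _ _ _ eq_refl), (lactL_clsR P _ x2 (tern P x1 y1 y2) Hq).
    + symmetry. apply tern_assoc; tern_side.
    + eapply GL_gcomp; reflexivity.
Qed.

Lemma env_ltors : ltors_ax (bt_left (env_data P)).
Proof.
  change (ltors_ax (Build_LTData (pA P) (pB P) (pX P) al be GL (lactL P))).
  unfold ltors_ax. cbn [lt_A lt_B lt_X lt_al lt_be lt_G lt_act].
  split; [exact GL_gpd|]. split; [exact GL_lact_ax|].
  split; [apply (pax P)|]. split; [apply (pax P)|].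
  split; [|split; [apply (pax P)|]].
  - intros g g'. induction g as [x1 y1 K1] using XXinv_ind.
    induction g' as [x2 y2 K2] using XXinv_ind. intros z Q Q' E.
    rewrite !(lactL_clsR P _ _ _ _ _ _ eq_refl) in E.
    rewrite GL_d1 in Q, Q'.
    assert (Hq : be z = be (tern P x1 y1 z)) by tern_side.
    transitivity (clsR P z (tern P x1 y1 z) Hq); [|symmetry]; apply clsR_eq; tern_side.
  - intros x y. split.
    + intro E. assert (Q : al x = @d1 _ GL (clsR P x y E)) by (rewrite GL_d1; auto).
      exists (clsR P x y E), Q. rewrite (lactL_clsR P _ x y E) by reflexivity.
      apply tern_id_r; auto.
    + intros (g&Q&E). revert Q E. induction g as [x1 y1 K1] using XXinv_ind. intros Q E.
      rewrite (lactL_clsR P _ x1 y1 K1) in E by reflexivity.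
      rewrite GL_d1 in Q. subst y. tern_side.
Qed.

End EnvelopeLeftGroupoid.

Section EnvelopeRight.
Variable P : Pregpd.
Local Notation al := (pal P).
Local Notation be := (pbe P).

Lemma pick_be_spec b : be (pick_be P b) = b.
Proof. unfold pick_be. destruct (constructive_indefinite_description _ _) as [x Hx]. exact Hx. Qed.

Lemma RL_iff (p q : TL P) : RL P p q <->
  be (fst (proj1_sig p)) = be (fst (proj1_sig q)) /\
  snd (proj1_sig q) = tern P (fst (proj1_sig p)) (fst (proj1_sig q)) (snd (proj1_sig p)).
Proof.
  unfold RL. split.
  - intros [H E]. split; auto. rewrite E, ternE. reflexivity.
  - intros [H E]. exists H. rewrite E, ternE. reflexivity.
Qed.

Lemma RL_refl p : RL P p p.
Proof. apply RL_iff. destruct p as [[x z] H]; cbn in *. rewrite tern_id_l; auto. Qed.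

Lemma RL_sym p q : RL P p q -> RL P q p.
Proof.
  rewrite !RL_iff. destruct p as [[x z] H], q as [[x' z'] H']; cbn in *.
  intros [E1 ->]. split; auto. rewrite tern_comp_l, tern_id_l; auto.
Qed.

Lemma RL_trans p q r : RL P p q -> RL P q r -> RL P p r.
Proof.
  rewrite !RL_iff. destruct p as [[x z] H], q as [[x' z'] H'], r as [[x'' z''] H'']; cbn in *.
  intros [E1 E2] [E3 E4]. split; [congruence|]. subst. rewrite tern_comp_l; auto.
Qed.

Lemma clsL_eq x z x' z' (H : al x = al z) (H' : al x' = al z') :
  be x = be x' -> z' = tern P x x' z -> clsL P x z H = clsL P x' z' H'.
Proof.
  intros E1 E2. apply qcls_eq; [exact RL_sym|exact RL_trans|]. apply RL_iff. auto.
Qed.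

Lemma clsL_congr x z z' H H' : z = z' -> clsL P x z H = clsL P x z' H'.
Proof. intros <-. do 2 f_equal. apply proof_irrelevance. Qed.

Lemma clsL_inv x z x' z' (H : al x = al z) (H' : al x' = al z') :
  clsL P x z H = clsL P x' z' H' -> be x = be x' /\ z' = tern P x x' z.
Proof. intro E. apply qcls_inv in E; [|exact RL_refl]. apply RL_iff in E. exact E. Qed.

Lemma XinvX_rep (c : XinvX P) : c = clsL P (lx P c) (lz P c) (lxz P c).
Proof.
  unfold lx, lz, lxz. rewrite <- (qcls_qrep _ _ c) at 1.
  destruct (qrep c) as [[a b] pf]. reflexivity.
Qed.

Lemma XinvX_ind (Q : XinvX P -> Prop) : (forall x z H, Q (clsL P x z H)) -> forall c, Q c.
Proof. intros K c. rewrite (XinvX_rep c). apply K. Qed.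

Lemma lx_clsL x z H :
  be (lx P (clsL P x z H)) = be x /\ lz P (clsL P x z H) = tern P x (lx P (clsL P x z H)) z.
Proof. destruct (clsL_inv _ _ _ _ _ _ (XinvX_rep (clsL P x z H))). auto. Qed.

Lemma GR_d0 x z H : @d0 _ (GR P) (clsL P x z H) = be x.
Proof. apply lx_clsL. Qed.

Lemma GR_d1 x z H : @d1 _ (GR P) (clsL P x z H) = be z.
Proof. cbn. destruct (lx_clsL x z H) as [E1 ->]. rewrite tern_be; auto. Qed.

Lemma GR_idn b p : be p = b -> idn (GR P) b = clsL P p p eq_refl.
Proof.
  intro E. apply clsL_eq; cbn; [|rewrite tern_id_r]; rewrite ?pick_be_spec; auto.
Qed.

Lemma GR_gcomp c1 c2 H x1 z1 H1 x2 z2 H2 H' :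
  c1 = clsL P x1 z1 H1 -> c2 = clsL P x2 z2 H2 ->
  @gcomp _ (GR P) c1 c2 H = clsL P x1 (tern P x2 z1 z2) H'.
Proof.
  intros -> ->. cbn. unfold GRcomp. symmetry.
  destruct (lx_clsL x1 z1 H1) as [E1 E2], (lx_clsL x2 z2 H2) as [E3 E4].
  apply clsL_eq; [cbn; congruence|]. cbn. rewrite ternE.
  cbn in H. revert H. rewrite E2, E4.
  set (r1 := lx P (clsL P x1 z1 H1)) in *. set (r2 := lx P (clsL P x2 z2 H2)) in *.
  clearbody r1 r2. intro H.
  assert (Hbe : be z1 = be x2) by (rewrite <- E3, <- H, tern_be; auto).
  rewrite tern_assoc; auto; try congruence.
  - rewrite tern_comp_l; auto; congruence.
  - rewrite tern_al; auto; congruence.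
Qed.

Lemma ractR_clsL c x z H w Hw : c = clsL P x z H -> ractR P w c Hw = tern P x w z.
Proof.
  intros ->. unfold ractR. rewrite ternE. destruct (lx_clsL x z H) as [E1 E2].
  cbn in Hw. rewrite E2, tern_comp_l; auto; congruence.
Qed.

End EnvelopeRight.

Section EnvelopeRightGroupoid.
Variable P : Pregpd.
Local Notation al := (pal P).
Local Notation be := (pbe P).
Local Notation GR := (GR P).

Lemma GR_idn_ends b : d0 (idn GR b) = b /\ d1 (idn GR b) = b.
Proof.
  rewrite (GR_idn P b (pick_be P b) (pick_be_spec P b)), GR_d0, GR_d1, pick_be_spec. auto.
Qed.

Lemma GR_gcomp_ends (f g : arr GR) (H : d1 f = d0 g) :
  d0 (gcomp f g H) = d0 f /\ d1 (gcomp f g H) = d1 g.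
Proof.
  revert H. induction f as [x z Hf] using XinvX_ind. induction g as [x' z' Hg] using XinvX_ind.
  intro H. pose proof H as K. rewrite GR_d1, GR_d0 in K.
  assert (H' : al x = al (tern P x' z z')) by tern_side.
  rewrite (GR_gcomp P _ _ H x z Hf x' z' Hg H') by reflexivity.
  rewrite !GR_d0, !GR_d1. split; tern_side.
Qed.

Lemma GR_gcomp_idn_l (f : arr GR) (H : d1 (idn GR (d0 f)) = d0 f) : gcomp (idn GR (d0 f)) f H = f.
Proof.
  revert H. induction f as [x z Hf] using XinvX_ind. intro H.
  assert (Hq : al x = al (tern P x x z)) by tern_side.
  rewrite (GR_gcomp P _ _ H x x eq_refl x z Hf Hq); [| |reflexivity].
  - apply clsL_congr, tern_id_l; auto.
  - rewrite GR_d0. apply GR_idn; auto.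
Qed.

Lemma GR_gcomp_idn_r (f : arr GR) (H : d1 f = d0 (idn GR (d1 f))) : gcomp f (idn GR (d1 f)) H = f.
Proof.
  revert H. induction f as [x z Hf] using XinvX_ind. intro H.
  assert (Hq : al x = al (tern P z z z)) by tern_side.
  rewrite (GR_gcomp P _ _ H x z Hf z z eq_refl Hq); [|reflexivity|].
  - apply clsL_congr, tern_id_l; auto.
  - rewrite GR_d1. apply GR_idn; auto.
Qed.

Lemma GR_gcomp_assoc (f g h : arr GR) (H1 : d1 f = d0 g) (H2 : d1 (gcomp f g H1) = d0 h)
  (H3 : d1 g = d0 h) (H4 : d1 f = d0 (gcomp g h H3)) :
  gcomp (gcomp f g H1) h H2 = gcomp f (gcomp g h H3) H4.
Proof.
  revert H1 H2 H3 H4. induction f as [x1 z1 Hf] using XinvX_ind.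
  induction g as [x2 z2 Hg] using XinvX_ind. induction h as [x3 z3 Hh] using XinvX_ind.
  intros H1 H2 H3 H4.
  pose proof H1 as K1. rewrite GR_d1, GR_d0 in K1.
  pose proof H3 as K3. rewrite GR_d1, GR_d0 in K3.
  assert (E1 : al x1 = al (tern P x2 z1 z2)) by tern_side.
  assert (E2 : al x2 = al (tern P x3 z2 z3)) by tern_side.
  assert (E3 : al x1 = al (tern P x3 (tern P x2 z1 z2) z3)) by tern_side.
  assert (E4 : al x1 = al (tern P x2 z1 (tern P x3 z2 z3))) by tern_side.
  rewrite (GR_gcomp P _ _ H2 x1 (tern P x2 z1 z2) E1 x3 z3 Hh E3)
    by (reflexivity || eapply GR_gcomp; reflexivity).
  rewrite (GR_gcomp P _ _ H4 x1 z1 Hf x2 (tern P x3 z2 z3) E2 E4)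
    by (reflexivity || eapply GR_gcomp; reflexivity).
  apply clsL_congr, tern_assoc; tern_side.
Qed.

Lemma GR_inv (f : arr GR) : exists (g : arr GR) (H1 : d1 f = d0 g) (H2 : d1 g = d0 f),
  gcomp f g H1 = idn GR (d0 f) /\ gcomp g f H2 = idn GR (d1 f).
Proof.
  induction f as [x z H] using XinvX_ind. exists (clsL P z x (eq_sym H)).
  assert (Q1 : @d1 _ GR (clsL P x z H) = @d0 _ GR (clsL P z x (eq_sym H)))
    by (rewrite GR_d1, GR_d0; auto).
  assert (Q2 : @d1 _ GR (clsL P z x (eq_sym H)) = @d0 _ GR (clsL P x z H))
    by (rewrite GR_d1, GR_d0; auto).
  exists Q1, Q2. rewrite GR_d0, GR_d1, (GR_idn P (be x) x), (GR_idn P (be z) z) by auto. split.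
  - assert (Hq : al x = al (tern P z z x)) by tern_side.
    rewrite (GR_gcomp P _ _ Q1 x z H z x (eq_sym H) Hq) by reflexivity.
    apply clsL_congr, tern_id_l; auto.
  - assert (Hq : al z = al (tern P x x z)) by tern_side.
    rewrite (GR_gcomp P _ _ Q2 z x (eq_sym H) x z H Hq) by reflexivity.
    apply clsL_congr, tern_id_l; auto.
Qed.

Lemma GR_gpd : gpd_ax GR.
Proof.
  split; [destruct (pax P) as ([x]&_); exact (inhabits (be x))|].
  exact (conj GR_idn_ends (conj GR_gcomp_ends (conj GR_gcomp_idn_l
    (conj GR_gcomp_idn_r (conj GR_gcomp_assoc GR_inv))))).
Qed.

Lemma GR_ract_ax : ract_ax be GR (ractR P).
Proof.
  split; [|split].
  - intros w h. induction h as [x z Hh] using XinvX_ind. intros Hw.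
    rewrite (ractR_clsL P _ x z Hh) by reflexivity. rewrite GR_d1.
    rewrite GR_d0 in Hw. tern_side.
  - intros x Hx. rewrite (ractR_clsL P _ x x eq_refl); [apply tern_id_l; auto|].
    apply GR_idn; auto.
  - intros w h k. induction h as [x1 z1 K1] using XinvX_ind.
    induction k as [x2 z2 K2] using XinvX_ind. intros Q1 Q2 Q3 Q4.
    pose proof Q1 as E1. rewrite GR_d0 in E1. pose proof Q3 as E3. rewrite GR_d1, GR_d0 in E3.
    assert (Hq : al x1 = al (tern P x2 z1 z2)) by tern_side.
    rewrite !(ractR_clsL P _ _ _ _ _ _ eq_refl), (ractR_clsL P _ x1 (tern P x2 z1 z2) Hq).
    + apply tern_assoc; tern_side.
    + eapply GR_gcomp; reflexivity.
Qed.

Lemma env_rtors : rtors_ax (bt_right (env_data P)).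
Proof.
  change (rtors_ax (Build_RTData (pA P) (pB P) (pX P) al be GR (ractR P))).
  unfold rtors_ax. cbn [rt_A rt_B rt_X rt_al rt_be rt_H rt_act].
  split; [exact GR_gpd|]. split; [exact GR_ract_ax|].
  split; [apply (pax P)|]. split; [apply (pax P)|].
  split; [|split; [apply (pax P)|]].
  - intros h h' w. induction h as [x1 z1 K1] using XinvX_ind.
    induction h' as [x2 z2 K2] using XinvX_ind. intros Q Q' E.
    rewrite !(ractR_clsL P _ _ _ _ _ _ eq_refl) in E.
    rewrite GR_d0 in Q, Q'.
    assert (Hq : al w = al (tern P x1 w z1)) by tern_side.
    transitivity (clsL P w (tern P x1 w z1) Hq); [|symmetry]; apply clsL_eq; tern_side.
  - intros x y. split.
    + intro E. assert (Q : be x = @d0 _ GR (clsL P x y E)) by (rewrite GR_d0; auto).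
      exists (clsL P x y E), Q. rewrite (ractR_clsL P _ x y E) by reflexivity.
      apply tern_id_l; auto.
    + intros (h&Q&E). revert Q E. induction h as [x1 z1 K1] using XinvX_ind. intros Q E.
      rewrite (ractR_clsL P _ x1 z1 K1) in E by reflexivity.
      rewrite GR_d0 in Q. subst y. tern_side.
Qed.

Lemma env_btors : btors_ax (env_data P).
Proof.
  split; [exact (env_ltors P)|]. split; [exact env_rtors|].
  change (forall (g : arr (GL P)) (x : pX P) (h : arr GR)
          (H1 : be x = d0 h) (H2 : al (ractR P x h H1) = d1 g)
          (H3 : al x = d1 g) (H4 : be (lactL P g x H3) = d0 h),
      lactL P g (ractR P x h H1) H2 = ractR P (lactL P g x H3) h H4).
  intros g. induction g as [x1 y1 K1] using XXinv_ind.
  intros x h. induction h as [x2 z2 K2] using XinvX_ind. intros Q1 Q2 Q3 Q4.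
  rewrite !(lactL_clsR P _ _ _ _ _ _ eq_refl), !(ractR_clsL P _ _ _ _ _ _ eq_refl),
    (lactL_clsR P _ _ _ _ _ _ eq_refl).
  pose proof Q1 as E1. pose proof Q3 as E3. rewrite GR_d0 in E1. rewrite GL_d1 in E3.
  symmetry. apply tern_assoc; tern_side.
Qed.

End EnvelopeRightGroupoid.

Section EnvelopeHom.
Variables (P P' : Pregpd) (f : PHom P P').
Local Notation al := (pal P).
Local Notation be := (pbe P).
Local Notation al' := (pal P').
Local Notation be' := (pbe P').
Local Notation fX := (ph_X f).
Local Notation fG := (bh_G (env_hom_data f)).
Local Notation fH := (bh_H (env_hom_data f)).

Lemma phom_al x : al' (fX x) = ph_A f (al x).
Proof. apply (phax f). Qed.

Lemma phom_be x : be' (fX x) = ph_B f (be x).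
Proof. apply (phax f). Qed.

Lemma phom_tern x y z : be x = be y -> al x = al z ->
  fX (tern P x y z) = tern P' (fX x) (fX y) (fX z).
Proof.
  intros H1 H2. destruct (phax f) as (_&_&F).
  assert (H1' : be' (fX x) = be' (fX y)) by (rewrite !phom_be; congruence).
  assert (H2' : al' (fX x) = al' (fX z)) by (rewrite !phom_al; congruence).
  rewrite <- (ternE _ x y z H1 H2), <- (ternE _ _ _ _ H1' H2'). apply F.
Qed.

Lemma env_hom_clsR x y H H' : fG (clsR P x y H) = clsR P' (fX x) (fX y) H'.
Proof.
  cbn. symmetry. destruct (rx_clsR P x y H) as [E1 E2].
  apply clsR_eq.
  - rewrite !phom_al. congruence.
  - rewrite E2. apply phom_tern; cbn in *; congruence.
Qed.

Lemma env_hom_clsL x z H H' : fH (clsL P x z H) = clsL P' (fX x) (fX z) H'.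
Proof.
  cbn. symmetry. destruct (lx_clsL P x z H) as [E1 E2].
  apply clsL_eq.
  - rewrite !phom_be. congruence.
  - rewrite E2. apply phom_tern; cbn in *; congruence.
Qed.

Lemma env_hom_GL_gfun : gfun_ax (GL P) (GL P') (ph_A f) fG.
Proof.
  split; [|split].
  - intro g. induction g as [x y H] using XXinv_ind.
    assert (H' : be' (fX x) = be' (fX y)) by (rewrite !phom_be; cbn in H; congruence).
    rewrite (env_hom_clsR x y H H'), !GL_d0, !GL_d1, !phom_al. auto.
  - intro a. rewrite (GL_idn P a (pick_al P a) (pick_al_spec P a)), (env_hom_clsR _ _ _ eq_refl).
    symmetry. apply GL_idn. rewrite phom_al, pick_al_spec. auto.
  - intros g1 g2. induction g1 as [x1 y1 K1] using XXinv_ind.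
    induction g2 as [x2 y2 K2] using XXinv_ind. intros Q Q'.
    pose proof Q as E. rewrite GL_d1, GL_d0 in E.
    assert (Hq : be x2 = be (tern P x1 y1 y2)) by tern_side.
    assert (Hq' : be' (fX x2) = be' (fX (tern P x1 y1 y2))) by (rewrite !phom_be; congruence).
    assert (L1 : be' (fX x1) = be' (fX y1)) by (rewrite !phom_be; cbn in K1; congruence).
    assert (L2 : be' (fX x2) = be' (fX y2)) by (rewrite !phom_be; cbn in K2; congruence).
    assert (Hq'' : be' (fX x2) = be' (tern P' (fX x1) (fX y1) (fX y2)))
      by (rewrite <- phom_tern; cbn in *; congruence).
    rewrite (GL_gcomp P _ _ Q x1 y1 K1 x2 y2 K2 Hq), (env_hom_clsR _ _ _ Hq') by reflexivity.
    rewrite (GL_gcomp P' _ _ Q' (fX x1) (fX y1) L1 (fX x2) (fX y2) L2 Hq'')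
      by apply env_hom_clsR.
    apply clsR_congr, phom_tern; tern_side.
Qed.

Lemma env_hom_GR_gfun : gfun_ax (GR P) (GR P') (ph_B f) fH.
Proof.
  split; [|split].
  - intro h. induction h as [x z H] using XinvX_ind.
    assert (H' : al' (fX x) = al' (fX z)) by (rewrite !phom_al; cbn in H; congruence).
    rewrite (env_hom_clsL x z H H'), !GR_d0, !GR_d1, !phom_be. auto.
  - intro b. rewrite (GR_idn P b (pick_be P b) (pick_be_spec P b)), (env_hom_clsL _ _ _ eq_refl).
    symmetry. apply GR_idn. rewrite phom_be, pick_be_spec. auto.
  - intros h1 h2. induction h1 as [x1 z1 K1] using XinvX_ind.
    induction h2 as [x2 z2 K2] using XinvX_ind. intros Q Q'.
    pose proof Q as E. rewrite GR_d1, GR_d0 in E.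
    assert (Hq : al x1 = al (tern P x2 z1 z2)) by tern_side.
    assert (Hq' : al' (fX x1) = al' (fX (tern P x2 z1 z2))) by (rewrite !phom_al; congruence).
    assert (L1 : al' (fX x1) = al' (fX z1)) by (rewrite !phom_al; cbn in K1; congruence).
    assert (L2 : al' (fX x2) = al' (fX z2)) by (rewrite !phom_al; cbn in K2; congruence).
    assert (Hq'' : al' (fX x1) = al' (tern P' (fX x2) (fX z1) (fX z2)))
      by (rewrite <- phom_tern; cbn in *; congruence).
    rewrite (GR_gcomp P _ _ Q x1 z1 K1 x2 z2 K2 Hq), (env_hom_clsL _ _ _ Hq') by reflexivity.
    rewrite (GR_gcomp P' _ _ Q' (fX x1) (fX z1) L1 (fX x2) (fX z2) L2 Hq'')
      by apply env_hom_clsL.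
    apply clsL_congr, phom_tern; tern_side.
Qed.

Lemma env_bthom : bthom_ax (env_hom_data f).
Proof.
  split; split; [exact env_hom_GL_gfun| | exact env_hom_GR_gfun|];
    (split; [exact phom_al|]); (split; [exact phom_be|]).
  - intro g. induction g as [x y H] using XXinv_ind. intros z Q Q'.
    cbn [lh_X lh_G lt_act bh_left bt_left env_data bt_lact] in *.
    assert (H' : be' (fX x) = be' (fX y)) by (rewrite !phom_be; cbn in H; congruence).
    rewrite (lactL_clsR P _ x y H), (lactL_clsR P' _ (fX x) (fX y) H') by
      (reflexivity || apply env_hom_clsR).
    change (al z = @d1 _ (GL P) (clsR P x y H)) in Q. rewrite GL_d1 in Q.
    apply phom_tern; cbn in *; congruence.
  - intros w h. induction h as [x z H] using XinvX_ind. intros Q Q'.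
    cbn [rh_X rh_H rt_act bh_right bt_right env_data bt_ract] in *.
    assert (H' : al' (fX x) = al' (fX z)) by (rewrite !phom_al; cbn in H; congruence).
    rewrite (ractR_clsL P _ x z H), (ractR_clsL P' _ (fX x) (fX z) H') by
      (reflexivity || apply env_hom_clsL).
    change (be w = @d0 _ (GR P) (clsL P x z H)) in Q. rewrite GR_d0 in Q.
    apply phom_tern; cbn in *; congruence.
Qed.

End EnvelopeHom.

(** * Functoriality and the identities (ii), (iii) *)

Lemma lthom_ext {T T' : LTors} (f g : LTHom T T') :
  lh_A f = lh_A g -> lh_B f = lh_B g -> lh_X f = lh_X g -> lh_G f = lh_G g -> f = g.
Proof.
  destruct f as [[] p], g as [[] p']; cbn; intros; subst. f_equal. apply proof_irrelevance.
Qed.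

Lemma rthom_ext {T T' : RTors} (f g : RTHom T T') :
  rh_A f = rh_A g -> rh_B f = rh_B g -> rh_X f = rh_X g -> rh_H f = rh_H g -> f = g.
Proof.
  destruct f as [[] p], g as [[] p']; cbn; intros; subst. f_equal. apply proof_irrelevance.
Qed.

Lemma bthom_ext {T T' : BTors} (f g : BTHom T T') :
  bh_A f = bh_A g -> bh_B f = bh_B g -> bh_X f = bh_X g -> bh_G f = bh_G g ->
  bh_H f = bh_H g -> f = g.
Proof.
  destruct f as [[] p], g as [[] p']; cbn; intros; subst. f_equal. apply proof_irrelevance.
Qed.

Lemma phom_ext {P P' : Pregpd} (f g : PHom P P') :
  ph_A f = ph_A g -> ph_B f = ph_B g -> ph_X f = ph_X g -> f = g.
Proof.
  destruct f as [[] p], g as [[] p']; cbn; intros; subst. f_equal. apply proof_irrelevance.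
Qed.

Definition cl_functor : Functor LTCat PCat := c_l cl_pregpd cl_phom.
Definition cr_functor : Functor RTCat PCat := c_r cr_pregpd cr_phom.
Definition env_functor : Functor PCat BTCat := env env_btors env_bthom.

Lemma is_functor_Fcomp {C D E : Cat} (G : Functor D E) (F : Functor C D) :
  is_functor G -> is_functor F -> is_functor (Fcomp G F).
Proof.
  intros [G1 G2] [F1 F2]. split.
  - intro a. cbn. rewrite F1. apply G1.
  - intros a b c g f. cbn. rewrite F2. apply G2.
Qed.

Lemma is_functor_U_r : is_functor U_r.
Proof. split; intros; apply lthom_ext; reflexivity. Qed.

Lemma is_functor_U_l : is_functor U_l.
Proof. split; intros; apply rthom_ext; reflexivity. Qed.

Lemma is_functor_cl : is_functor cl_functor.
Proof. split; intros; apply phom_ext; reflexivity. Qed.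

Lemma is_functor_cr : is_functor cr_functor.
Proof. split; intros; apply phom_ext; reflexivity. Qed.

Lemma is_functor_env : is_functor env_functor.
Proof.
  split; [intro P | intros P P' P'' g f]; apply bthom_ext; try reflexivity;
    apply functional_extensionality; cbn [fm fo env_functor env bthd btd cmp BTCat bthom_comp].
  - intro c. induction c as [x y H] using XXinv_ind. apply env_hom_clsR.
  - intro c. induction c as [x z H] using XinvX_ind. apply env_hom_clsL.
  - intro c. induction c as [x y H] using XXinv_ind.
    assert (H1 : pbe P' (ph_X f x) = pbe P' (ph_X f y)) by (rewrite !phom_be; cbn in H; congruence).
    assert (H2 : pbe P'' (ph_X g (ph_X f x)) = pbe P'' (ph_X g (ph_X f y)))
      by (rewrite !phom_be; cbn in H; congruence).
    transitivity (clsR P'' (ph_X g (ph_X f x)) (ph_X g (ph_X f y)) H2).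
    + exact (env_hom_clsR _ _ (phom_comp P P' P'' g f) x y H H2).
    + cbn [bh_G]. rewrite (env_hom_clsR _ _ f x y H H1). symmetry. apply env_hom_clsR.
  - intro c. induction c as [x z H] using XinvX_ind.
    assert (H1 : pal P' (ph_X f x) = pal P' (ph_X f z)) by (rewrite !phom_al; cbn in H; congruence).
    assert (H2 : pal P'' (ph_X g (ph_X f x)) = pal P'' (ph_X g (ph_X f z)))
      by (rewrite !phom_al; cbn in H; congruence).
    transitivity (clsL P'' (ph_X g (ph_X f x)) (ph_X g (ph_X f z)) H2).
    + exact (env_hom_clsL _ _ (phom_comp P P' P'' g f) x z H H2).
    + cbn [bh_H]. rewrite (env_hom_clsL _ _ f x z H H1). symmetry. apply env_hom_clsL.
Qed.

Definition transport {A B : Type} (e : A = B) (x : A) : B := match e with eq_refl => x end.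

Lemma transport_id (T : Type) (e : T = T) x : transport e x = x.
Proof. rewrite (proof_irrelevance _ e eq_refl). reflexivity. Qed.

Lemma hcast_phom (P1 P2 Q1 Q2 : Pregpd) (e1 : P1 = P2) (e2 : Q1 = Q2)
  (f : PHom P1 Q1) (g : PHom P2 Q2) :
  (forall a, ph_A g (transport (f_equal (fun P : Pregpd => pA P) e1) a) =
             transport (f_equal (fun P : Pregpd => pA P) e2) (ph_A f a)) ->
  (forall b, ph_B g (transport (f_equal (fun P : Pregpd => pB P) e1) b) =
             transport (f_equal (fun P : Pregpd => pB P) e2) (ph_B f b)) ->
  (forall x, ph_X g (transport (f_equal (fun P : Pregpd => pX P) e1) x) =
             transport (f_equal (fun P : Pregpd => pX P) e2) (ph_X f x)) ->
  @hcast PCat P1 P2 Q1 Q2 e1 e2 f = g.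
Proof.
  destruct e1, e2. cbn. intros HA HB HX. symmetry.
  apply phom_ext; apply functional_extensionality; auto.
Qed.

Lemma pregpd_eq_op (A B X : Type) al be op1 op2 p1 p2 : op1 = op2 ->
  Build_Pregpd (Build_PData A B X al be op1) p1 = Build_Pregpd (Build_PData A B X al be op2) p2.
Proof. intros ->. f_equal. apply proof_irrelevance. Qed.

Lemma pregpd_eta_op (P : Pregpd) op p : op = pop P ->
  Build_Pregpd (Build_PData (pA P) (pB P) (pX P) (pal P) (pbe P) op) p = P.
Proof. destruct P as [[] p0]. apply pregpd_eq_op. Qed.

Lemma pop_ext (P : PData)
  (op : forall x y z : pX P, pbe P x = pbe P y -> pal P x = pal P z -> pX P) :
  (forall x y z H1 H2, op x y z H1 H2 = tern P x y z) -> op = pop P.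
Proof.
  intro K. do 5 (apply functional_extensionality_dep; intro).
  rewrite K, ternE. reflexivity.
Qed.

Lemma bt_lact_ract (T : BTors) g x h : bt_al T x = d1 g -> bt_be T x = d0 h ->
  lact (bt_lt T) g (ract (bt_rt T) x h) = ract (bt_rt T) (lact (bt_lt T) g x) h.
Proof.
  intros Hg Hh. destruct (btax T) as (_&_&comm).
  assert (H2 : bt_al T (bt_ract T x h Hh) = d1 g)
    by (change (rt_al (bt_rt T) (rt_act (bt_rt T) x h Hh) = d1 g); rewrite ractE, ract_al; auto).
  assert (H4 : bt_be T (bt_lact T g x Hg) = d0 h)
    by (change (lt_be (bt_lt T) (lt_act (bt_lt T) g x Hg) = d0 h); rewrite lactE, lact_be; auto).
  pose proof (comm g x h Hh H2 Hg H4) as E.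
  change (lt_act (bt_lt T) g (rt_act (bt_rt T) x h Hh) H2 =
          rt_act (bt_rt T) (lt_act (bt_lt T) g x Hg) h H4) in E.
  rewrite !lactE, !ractE, !lactE in E. exact E.
Qed.

Lemma cr_op_bt (T : BTors) x y z H1 H2 :
  cr_op (bt_rt T) x y z H1 H2 = tern (cl_data (bt_lt T)) x y z.
Proof.
  change (pop (cr_data (bt_rt T)) x y z H1 H2 = tern (cl_data (bt_lt T)) x y z).
  rewrite ternE.
  destruct (proj1 (lt_orbitP (bt_lt T) x y) H1) as (g&Hg&Eg).
  destruct (proj1 (rt_orbitP (bt_rt T) x z) H2) as (h&Hh&Eh).
  rewrite (cr_tern (bt_rt T) x y z h), (cl_tern (bt_lt T) x y z g); auto.
  rewrite <- Eh, bt_lact_ract, Eg; auto.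
Qed.

Lemma cr_U_l_eq_cl_U_r : functor_eq (Fcomp cr_functor U_l) (Fcomp cl_functor U_r).
Proof.
  unshelve eexists.
  - intro T. exact (pregpd_eq_op _ _ _ _ _ _ _ _ _ (pop_ext (cl_data (bt_lt T)) _ (cr_op_bt T))).
  - intros T T' f. apply hcast_phom; intros; rewrite !transport_id; reflexivity.
Qed.

Lemma env_lact (P : Pregpd) x y H z : pal P z = pal P x ->
  lact (bt_lt (fo env_functor P)) (clsR P x y H) z = tern P x y z.
Proof.
  intro Hz. assert (Q : pal P z = @d1 _ (GL P) (clsR P x y H)) by (rewrite GL_d1; auto).
  rewrite <- (lactE (bt_lt (fo env_functor P)) _ _ Q). exact (lactL_clsR P _ x y H z Q eq_refl).
Qed.

Lemma env_ract (P : Pregpd) x z H w : pbe P w = pbe P x ->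
  ract (bt_rt (fo env_functor P)) w (clsL P x z H) = tern P x w z.
Proof.
  intro Hw. assert (Q : pbe P w = @d0 _ (GR P) (clsL P x z H)) by (rewrite GR_d0; auto).
  rewrite <- (ractE (bt_rt (fo env_functor P)) _ _ Q). exact (ractR_clsL P _ x z H w Q eq_refl).
Qed.

Lemma cl_op_env (P : Pregpd) x y z H1 H2 :
  cl_op (bt_lt (fo env_functor P)) x y z H1 H2 = tern P x y z.
Proof.
  change (pop (cl_data (bt_lt (fo env_functor P))) x y z H1 H2 = tern P x y z). rewrite ternE.
  rewrite (cl_tern (bt_lt (fo env_functor P)) x y z (clsR P x y H1)), env_lact; auto.
  - exact (eq_sym (GL_d1 P x y H1)).
  - rewrite env_lact, tern_id_r; auto.
Qed.

Lemma cr_op_env (P : Pregpd) x y z H1 H2 :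
  cr_op (bt_rt (fo env_functor P)) x y z H1 H2 = tern P x y z.
Proof.
  change (pop (cr_data (bt_rt (fo env_functor P))) x y z H1 H2 = tern P x y z). rewrite ternE.
  rewrite (cr_tern (bt_rt (fo env_functor P)) x y z (clsL P x z H2)), env_ract; auto.
  - exact (eq_sym (GR_d0 P x z H2)).
  - rewrite env_ract, tern_id_l; auto.
Qed.

Lemma cl_U_r_env_eq_id : functor_eq (Fcomp cl_functor (Fcomp U_r env_functor)) (Fid PCat).
Proof.
  unshelve eexists.
  - intro P. apply pregpd_eta_op, pop_ext, cl_op_env.
  - intros P P' f. apply hcast_phom; intros; rewrite !transport_id; reflexivity.
Qed.

Lemma cr_U_l_env_eq_id : functor_eq (Fcomp cr_functor (Fcomp U_l env_functor)) (Fid PCat).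
Proof.
  unshelve eexists.
  - intro P. apply pregpd_eta_op, pop_ext, cr_op_env.
  - intros P P' f. apply hcast_phom; intros; rewrite !transport_id; reflexivity.
Qed.

(** * Torsors as enveloping torsors *)

Definition lact_compatible (L : LTors)
  (op : forall x y z : lt_X L, lt_be L x = lt_be L y -> lt_al L x = lt_al L z -> lt_X L) : Prop :=
  forall x y z g, lt_al L x = d1 g -> lact L g x = y -> lt_al L x = lt_al L z ->
    tern (Build_PData (lt_A L) (lt_B L) (lt_X L) (lt_al L) (lt_be L) op) x y z = lact L g z.

Section LeftComparison.
Variable L : LTors.
Local Notation al := (lt_al L).
Local Notation be := (lt_be L).
Local Notation G := (lt_G L).
Variable op : forall x y z : lt_X L, be x = be y -> al x = al z -> lt_X L.
Variable p : pregpd_ax (Build_PData (lt_A L) (lt_B L) (lt_X L) al be op).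
Hypothesis compat : lact_compatible L op.
Definition lt_pregpd : Pregpd := Build_Pregpd _ p.
Local Notation PL := lt_pregpd.

Lemma tern_lt_pregpd x y z g : al x = d1 g -> lact L g x = y -> al x = al z ->
  tern PL x y z = lact L g z.
Proof. exact (compat x y z g). Qed.

Lemma arr_of_XXinv_ex (c : XXinv PL) :
  exists g, al (rx PL c) = d1 g /\ lact L g (rx PL c) = ry PL c.
Proof. apply lt_orbitP. exact (rxy PL c). Qed.

Definition arr_of_XXinv (c : XXinv PL) : arr G :=
  proj1_sig (constructive_indefinite_description _ (arr_of_XXinv_ex c)).

Lemma arr_of_XXinvE c (x y : pX PL) (H : pbe PL x = pbe PL y) g :
  c = clsR PL x y H -> al x = d1 g -> lact L g x = y -> arr_of_XXinv c = g.
Proof.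
  intros -> Hg Eg. unfold arr_of_XXinv.
  destruct (constructive_indefinite_description _ _) as [g' [E1 E2]]. cbn.
  destruct (rx_clsR PL x y H) as [F1 F2].
  apply (lact_inj L _ _ (rx PL (clsR PL x y H))); [exact E1|exact (eq_trans F1 Hg)|].
  rewrite E2, F2. apply tern_lt_pregpd; auto.
Qed.

Definition pick_d1 (g : arr G) : lt_X L :=
  proj1_sig (constructive_indefinite_description _ (lt_surj_al L (d1 g))).

Lemma pick_d1_spec g : al (pick_d1 g) = d1 g.
Proof. unfold pick_d1. destruct (constructive_indefinite_description _ _) as [x Hx]. exact Hx. Qed.

Lemma pick_d1_be g : be (pick_d1 g) = be (lact L g (pick_d1 g)).
Proof. symmetry. apply lact_be, pick_d1_spec. Qed.

Definition XXinv_of_arr (g : arr G) : XXinv PL :=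
  clsR PL (pick_d1 g) (lact L g (pick_d1 g)) (pick_d1_be g).

Lemma XXinv_of_arrE g (x : pX PL) (H : pbe PL x = pbe PL (lact L g x)) :
  al x = d1 g -> XXinv_of_arr g = clsR PL x (lact L g x) H.
Proof.
  intro Hx. apply clsR_eq.
  - cbn. rewrite pick_d1_spec. auto.
  - symmetry. apply tern_lt_pregpd; rewrite ?pick_d1_spec; auto.
Qed.

Lemma XXinv_of_arrK c : XXinv_of_arr (arr_of_XXinv c) = c.
Proof.
  induction c as [x y H] using XXinv_ind.
  destruct (proj1 (lt_orbitP L x y) H) as (g&Hg&Eg).
  rewrite (arr_of_XXinvE _ x y H g eq_refl) by auto.
  assert (H' : pbe PL x = pbe PL (lact L g x)) by (rewrite Eg; exact H).
  rewrite (XXinv_of_arrE g x H') by auto. apply clsR_congr. auto.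
Qed.

Lemma arr_of_XXinvK g : arr_of_XXinv (XXinv_of_arr g) = g.
Proof. apply (arr_of_XXinvE _ _ _ (pick_d1_be g)); auto using pick_d1_spec. Qed.

Lemma gfun_arr_of_XXinv : gfun_ax (GL PL) G (fun a => a) arr_of_XXinv.
Proof.
  pose proof (lt_gpd L) as hG. split; [|split].
  - intro c. induction c as [x y H] using XXinv_ind. rewrite GL_d0, GL_d1.
    destruct (proj1 (lt_orbitP L x y) H) as (g&Hg&Eg).
    rewrite (arr_of_XXinvE _ x y H g eq_refl Hg Eg), <- Eg.
    split; [apply eq_sym, lact_al|]; auto.
  - intro a. destruct (lt_surj_al L a) as [q Hq].
    rewrite (GL_idn PL a q Hq). apply (arr_of_XXinvE _ q q eq_refl); auto.
    + rewrite idn_d1; auto.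
    + apply lact_idn; auto.
  - intros c1 c2. induction c1 as [x1 y1 K1] using XXinv_ind.
    induction c2 as [x2 y2 K2] using XXinv_ind. intros Q Q'.
    pose proof Q as E. rewrite GL_d1, GL_d0 in E.
    destruct (proj1 (lt_orbitP L x1 y1) K1) as (g1&Hg1&Eg1).
    destruct (proj1 (lt_orbitP L x2 y2) K2) as (g2&Hg2&Eg2).
    assert (D12 : d1 g1 = d0 g2) by (rewrite <- Hg1; cbn in E; rewrite E, <- Eg2, lact_al; auto).
    assert (Hq : be x2 = be (tern PL x1 y1 y2)).
    { rewrite (tern_lt_pregpd x1 y1 y2 g1); auto. rewrite lact_be; cbn in *; congruence. }
    rewrite (GL_gcomp PL _ _ Q x1 y1 K1 x2 y2 K2 Hq) by reflexivity.
    rewrite tcompE.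
    rewrite (arr_of_XXinvE (clsR PL x1 y1 K1) x1 y1 K1 g1),
      (arr_of_XXinvE (clsR PL x2 y2 K2) x2 y2 K2 g2) by auto.
    apply (arr_of_XXinvE _ x2 _ Hq); [reflexivity|rewrite tcomp_d1; auto|].
    rewrite <- lact_comp, Eg2; auto. symmetry. apply tern_lt_pregpd; auto.
Qed.

Lemma lthom_ax_arr_of_XXinv : lthom_ax (@Build_LTHomData (bt_left (env_data PL)) L
  (fun a => a) (fun b => b) (fun x => x) arr_of_XXinv).
Proof.
  split; [exact gfun_arr_of_XXinv|]. split; [reflexivity|]. split; [reflexivity|].
  intro c. induction c as [x y H] using XXinv_ind. intros z Q Q'.
  cbn [lh_X lh_G lt_act bt_left env_data bt_lact] in *.
  pose proof Q as E. change (al z = @d1 _ (GL PL) (clsR PL x y H)) in E. rewrite GL_d1 in E.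
  destruct (proj1 (lt_orbitP L x y) H) as (g&Hg&Eg).
  rewrite (lactL_clsR PL _ x y H), lactE, (arr_of_XXinvE _ x y H g); auto.
Qed.

Lemma gfun_XXinv_of_arr : gfun_ax G (GL PL) (fun a => a) XXinv_of_arr.
Proof.
  pose proof (lt_gpd L) as hG. split; [|split].
  - intro g. unfold XXinv_of_arr. rewrite GL_d0, GL_d1.
    split; [apply lact_al|]; apply pick_d1_spec.
  - intro a. destruct (lt_surj_al L a) as [q Hq].
    assert (H' : pbe PL q = pbe PL (lact L (idn G a) q)) by (rewrite lact_idn; auto).
    rewrite (XXinv_of_arrE _ q H'), (GL_idn PL a q Hq) by (rewrite idn_d1; auto).
    apply clsR_congr, lact_idn; auto.
  - intros g1 g2 Q Q'. rewrite tcompE.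
    destruct (lt_surj_al L (d1 g2)) as [x Hx].
    set (y := lact L g2 x).
    assert (Hy : al y = d1 g1) by (unfold y; rewrite lact_al; auto).
    assert (K2 : pbe PL x = pbe PL y) by (unfold y; cbn; rewrite lact_be; auto).
    assert (K1 : pbe PL y = pbe PL (lact L g1 y)) by (cbn; rewrite lact_be; auto).
    assert (K : pbe PL x = pbe PL (lact L (tcomp G g1 g2) x))
      by (cbn; rewrite lact_be; rewrite ?tcomp_d1; auto).
    assert (Hq : pbe PL x = pbe PL (tern PL y (lact L g1 y) y))
      by (rewrite tern_id_r; cbn in *; congruence).
    rewrite (XXinv_of_arrE _ x K) by (rewrite tcomp_d1; auto).
    rewrite (GL_gcomp PL _ _ Q' y (lact L g1 y) K1 x y K2 Hq) by (apply XXinv_of_arrE; auto).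
    apply clsR_congr. rewrite tern_id_r; auto. unfold y. rewrite lact_comp; auto.
Qed.

Lemma lthom_ax_XXinv_of_arr : lthom_ax (@Build_LTHomData L (bt_left (env_data PL))
  (fun a => a) (fun b => b) (fun x => x) XXinv_of_arr).
Proof.
  split; [exact gfun_XXinv_of_arr|]. split; [reflexivity|]. split; [reflexivity|].
  intros g z Q Q'. cbn [lh_X lh_G lt_act bt_left env_data bt_lact] in *.
  assert (H' : pbe PL z = pbe PL (lact L g z)) by (cbn; rewrite lact_be; auto).
  rewrite lactE, (lactL_clsR PL _ z (lact L g z) H') by (apply XXinv_of_arrE; auto).
  symmetry. apply tern_id_r; auto.
Qed.

End LeftComparison.

Definition ract_compatible (R : RTors)
  (op : forall x y z : rt_X R, rt_be R x = rt_be R y -> rt_al R x = rt_al R z -> rt_X R) : Prop :=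
  forall x y z h, rt_be R x = d0 h -> ract R x h = z -> rt_be R x = rt_be R y ->
    tern (Build_PData (rt_A R) (rt_B R) (rt_X R) (rt_al R) (rt_be R) op) x y z = ract R y h.

Section RightComparison.
Variable R : RTors.
Local Notation al := (rt_al R).
Local Notation be := (rt_be R).
Local Notation H := (rt_H R).
Variable op : forall x y z : rt_X R, be x = be y -> al x = al z -> rt_X R.
Variable p : pregpd_ax (Build_PData (rt_A R) (rt_B R) (rt_X R) al be op).
Hypothesis compat : ract_compatible R op.
Definition rt_pregpd : Pregpd := Build_Pregpd _ p.
Local Notation PR := rt_pregpd.

Lemma tern_rt_pregpd x y z h : be x = d0 h -> ract R x h = z -> be x = be y ->
  tern PR x y z = ract R y h.
Proof. exact (compat x y z h). Qed.

Lemma arr_of_XinvX_ex (c : XinvX PR) :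
  exists h, be (lx PR c) = d0 h /\ ract R (lx PR c) h = lz PR c.
Proof. apply rt_orbitP. exact (lxz PR c). Qed.

Definition arr_of_XinvX (c : XinvX PR) : arr H :=
  proj1_sig (constructive_indefinite_description _ (arr_of_XinvX_ex c)).

Lemma arr_of_XinvXE c (x z : pX PR) (Hxz : pal PR x = pal PR z) h :
  c = clsL PR x z Hxz -> be x = d0 h -> ract R x h = z -> arr_of_XinvX c = h.
Proof.
  intros -> Hh Eh. unfold arr_of_XinvX.
  destruct (constructive_indefinite_description _ _) as [h' [E1 E2]]. cbn.
  destruct (lx_clsL PR x z Hxz) as [F1 F2].
  apply (ract_inj R _ _ (lx PR (clsL PR x z Hxz))); [exact E1|exact (eq_trans F1 Hh)|].
  rewrite E2, F2. apply tern_rt_pregpd; auto.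
Qed.

Definition pick_d0 (h : arr H) : rt_X R :=
  proj1_sig (constructive_indefinite_description _ (rt_surj_be R (d0 h))).

Lemma pick_d0_spec h : be (pick_d0 h) = d0 h.
Proof. unfold pick_d0. destruct (constructive_indefinite_description _ _) as [x Hx]. exact Hx. Qed.

Lemma pick_d0_al h : al (pick_d0 h) = al (ract R (pick_d0 h) h).
Proof. symmetry. apply ract_al, pick_d0_spec. Qed.

Definition XinvX_of_arr (h : arr H) : XinvX PR :=
  clsL PR (pick_d0 h) (ract R (pick_d0 h) h) (pick_d0_al h).

Lemma XinvX_of_arrE h (x : pX PR) (Hx' : pal PR x = pal PR (ract R x h)) :
  be x = d0 h -> XinvX_of_arr h = clsL PR x (ract R x h) Hx'.
Proof.
  intro Hx. apply clsL_eq.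
  - cbn. rewrite pick_d0_spec. auto.
  - symmetry. apply tern_rt_pregpd; rewrite ?pick_d0_spec; auto.
Qed.

Lemma XinvX_of_arrK c : XinvX_of_arr (arr_of_XinvX c) = c.
Proof.
  induction c as [x z Hxz] using XinvX_ind.
  destruct (proj1 (rt_orbitP R x z) Hxz) as (h&Hh&Eh).
  rewrite (arr_of_XinvXE _ x z Hxz h eq_refl) by auto.
  assert (Hx' : pal PR x = pal PR (ract R x h)) by (rewrite Eh; exact Hxz).
  rewrite (XinvX_of_arrE h x Hx') by auto. apply clsL_congr. auto.
Qed.

Lemma arr_of_XinvXK h : arr_of_XinvX (XinvX_of_arr h) = h.
Proof. apply (arr_of_XinvXE _ _ _ (pick_d0_al h)); auto using pick_d0_spec. Qed.

Lemma gfun_arr_of_XinvX : gfun_ax (GR PR) H (fun b => b) arr_of_XinvX.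
Proof.
  pose proof (rt_gpd R) as hG. split; [|split].
  - intro c. induction c as [x z Hxz] using XinvX_ind. rewrite GR_d0, GR_d1.
    destruct (proj1 (rt_orbitP R x z) Hxz) as (h&Hh&Eh).
    rewrite (arr_of_XinvXE _ x z Hxz h eq_refl Hh Eh), <- Eh.
    split; [|apply eq_sym, ract_be]; auto.
  - intro b. destruct (rt_surj_be R b) as [q Hq].
    rewrite (GR_idn PR b q Hq). apply (arr_of_XinvXE _ q q eq_refl); auto.
    + rewrite idn_d0; auto.
    + apply ract_idn; auto.
  - intros c1 c2. induction c1 as [x1 z1 K1] using XinvX_ind.
    induction c2 as [x2 z2 K2] using XinvX_ind. intros Q Q'.
    pose proof Q as E. rewrite GR_d1, GR_d0 in E.
    destruct (proj1 (rt_orbitP R x1 z1) K1) as (h1&Hh1&Eh1).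
    destruct (proj1 (rt_orbitP R x2 z2) K2) as (h2&Hh2&Eh2).
    assert (D12 : d1 h1 = d0 h2) by (rewrite <- Hh2; cbn in E; rewrite <- E, <- Eh1, ract_be; auto).
    assert (Hq : al x1 = al (tern PR x2 z1 z2)).
    { rewrite (tern_rt_pregpd x2 z1 z2 h2); auto. rewrite ract_al; cbn in *; congruence. }
    rewrite (GR_gcomp PR _ _ Q x1 z1 K1 x2 z2 K2 Hq) by reflexivity.
    rewrite tcompE.
    rewrite (arr_of_XinvXE (clsL PR x1 z1 K1) x1 z1 K1 h1),
      (arr_of_XinvXE (clsL PR x2 z2 K2) x2 z2 K2 h2) by auto.
    apply (arr_of_XinvXE _ x1 _ Hq); [reflexivity|rewrite tcomp_d0; auto|].
    rewrite <- ract_comp, Eh1; auto. symmetry. apply tern_rt_pregpd; auto.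
Qed.

Lemma rthom_ax_arr_of_XinvX : rthom_ax (@Build_RTHomData (bt_right (env_data PR)) R
  (fun a => a) (fun b => b) (fun x => x) arr_of_XinvX).
Proof.
  split; [exact gfun_arr_of_XinvX|]. split; [reflexivity|]. split; [reflexivity|].
  intros w c. induction c as [x z Hxz] using XinvX_ind. intros Q Q'.
  cbn [rh_X rh_H rt_act bt_right env_data bt_ract] in *.
  pose proof Q as E. change (be w = @d0 _ (GR PR) (clsL PR x z Hxz)) in E. rewrite GR_d0 in E.
  destruct (proj1 (rt_orbitP R x z) Hxz) as (h&Hh&Eh).
  rewrite (ractR_clsL PR _ x z Hxz), ractE, (arr_of_XinvXE _ x z Hxz h); auto.
Qed.

Lemma gfun_XinvX_of_arr : gfun_ax H (GR PR) (fun b => b) XinvX_of_arr.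
Proof.
  pose proof (rt_gpd R) as hG. split; [|split].
  - intro h. unfold XinvX_of_arr. rewrite GR_d0, GR_d1.
    split; [|apply ract_be]; apply pick_d0_spec.
  - intro b. destruct (rt_surj_be R b) as [q Hq].
    assert (Hq' : pal PR q = pal PR (ract R q (idn H b))) by (rewrite ract_idn; auto).
    rewrite (XinvX_of_arrE _ q Hq'), (GR_idn PR b q Hq) by (rewrite idn_d0; auto).
    apply clsL_congr, ract_idn; auto.
  - intros h1 h2 Q Q'. rewrite tcompE.
    destruct (rt_surj_be R (d0 h1)) as [x Hx].
    set (y := ract R x h1).
    assert (Hy : be y = d0 h2) by (unfold y; rewrite ract_be; auto).
    assert (K1 : pal PR x = pal PR y) by (unfold y; cbn; rewrite ract_al; auto).
    assert (K2 : pal PR y = pal PR (ract R y h2)) by (cbn; rewrite ract_al; auto).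
    assert (K : pal PR x = pal PR (ract R x (tcomp H h1 h2)))
      by (cbn; rewrite ract_al; rewrite ?tcomp_d0; auto).
    assert (Hq : pal PR x = pal PR (tern PR y y (ract R y h2)))
      by (rewrite tern_id_l; cbn in *; congruence).
    rewrite (XinvX_of_arrE _ x K) by (rewrite tcomp_d0; auto).
    rewrite (GR_gcomp PR _ _ Q' x y K1 y (ract R y h2) K2 Hq) by (apply XinvX_of_arrE; auto).
    apply clsL_congr. rewrite tern_id_l; auto. unfold y. rewrite ract_comp; auto.
Qed.

Lemma rthom_ax_XinvX_of_arr : rthom_ax (@Build_RTHomData R (bt_right (env_data PR))
  (fun a => a) (fun b => b) (fun x => x) XinvX_of_arr).
Proof.
  split; [exact gfun_XinvX_of_arr|]. split; [reflexivity|]. split; [reflexivity|].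
  intros z h Q Q'. cbn [rh_X rh_H rt_act bt_right env_data bt_ract] in *.
  assert (Hz : pal PR z = pal PR (ract R z h)) by (cbn; rewrite ract_al; auto).
  rewrite ractE, (ractR_clsL PR _ z (ract R z h) Hz) by (apply XinvX_of_arrE; auto).
  symmetry. apply tern_id_l; auto.
Qed.

End RightComparison.

Lemma arr_of_XXinv_natural (L L' : LTors) op p op' p'
  (compat : lact_compatible L op) (compat' : lact_compatible L' op')
  (f : LTHom L L') (phi : PHom (lt_pregpd L op p) (lt_pregpd L' op' p'))
  (phi_X : forall x, ph_X phi x = lh_X f x) (c : XXinv (lt_pregpd L op p)) :
  arr_of_XXinv L' op' p' (bh_G (env_hom_data phi) c) = lh_G f (arr_of_XXinv L op p c).
Proof.
  induction c as [x y H] using XXinv_ind.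
  destruct (proj1 (lt_orbitP L x y) H) as (g&Hg&Eg).
  assert (H' : pbe (lt_pregpd L' op' p') (ph_X phi x) = pbe (lt_pregpd L' op' p') (ph_X phi y))
    by (rewrite !phom_be; cbn in *; congruence).
  rewrite (arr_of_XXinvE L op p compat _ x y H g eq_refl) by auto.
  apply (arr_of_XXinvE L' op' p' compat' _ _ _ H'); [apply env_hom_clsR| |].
  - rewrite phi_X. destruct (lthax f) as ((F1&_)&F2&_). rewrite F2, Hg. symmetry. apply F1.
  - rewrite !phi_X, <- lthom_lact, Eg; auto.
Qed.

Lemma arr_of_XinvX_natural (R R' : RTors) op p op' p'
  (compat : ract_compatible R op) (compat' : ract_compatible R' op')
  (f : RTHom R R') (phi : PHom (rt_pregpd R op p) (rt_pregpd R' op' p'))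
  (phi_X : forall x, ph_X phi x = rh_X f x) (c : XinvX (rt_pregpd R op p)) :
  arr_of_XinvX R' op' p' (bh_H (env_hom_data phi) c) = rh_H f (arr_of_XinvX R op p c).
Proof.
  induction c as [x z H] using XinvX_ind.
  destruct (proj1 (rt_orbitP R x z) H) as (h&Hh&Eh).
  assert (H' : pal (rt_pregpd R' op' p') (ph_X phi x) = pal (rt_pregpd R' op' p') (ph_X phi z))
    by (rewrite !phom_al; cbn in *; congruence).
  rewrite (arr_of_XinvXE R op p compat _ x z H h eq_refl) by auto.
  apply (arr_of_XinvXE R' op' p' compat' _ _ _ H'); [apply env_hom_clsL| |].
  - rewrite phi_X. destruct (rthax f) as ((F1&_)&_&F3&_). rewrite F3, Hh. symmetry. apply F1.
  - rewrite !phi_X, <- rthom_ract, Eh; auto.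
Qed.

Lemma U_r_env_cl_iso_id : nat_iso (Fcomp U_r (Fcomp env_functor cl_functor)) (Fid LTCat).
Proof.
  exists (fun T => Build_LTHom (bt_lt (fo env_functor (fo cl_functor T))) T _
    (lthom_ax_arr_of_XXinv T (cl_op T) (cl_pregpd T) (cl_tern T))).
  split.
  - intro T. exists (Build_LTHom T (bt_lt (fo env_functor (fo cl_functor T))) _
      (lthom_ax_XXinv_of_arr T (cl_op T) (cl_pregpd T) (cl_tern T))).
    split; apply lthom_ext; try reflexivity; apply functional_extensionality.
    + exact (XXinv_of_arrK T _ (cl_pregpd T) (cl_tern T)).
    + exact (arr_of_XXinvK T _ (cl_pregpd T) (cl_tern T)).
  - intros T T' f. apply lthom_ext; try reflexivity. apply functional_extensionality.
    exact (arr_of_XXinv_natural T T' _ (cl_pregpd T) _ (cl_pregpd T') (cl_tern T) (cl_tern T')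
      f (fm cl_functor f) (fun x => eq_refl)).
Qed.

Lemma U_l_env_cr_iso_id : nat_iso (Fcomp U_l (Fcomp env_functor cr_functor)) (Fid RTCat).
Proof.
  exists (fun T => Build_RTHom (bt_rt (fo env_functor (fo cr_functor T))) T _
    (rthom_ax_arr_of_XinvX T (cr_op T) (cr_pregpd T) (cr_tern T))).
  split.
  - intro T. exists (Build_RTHom T (bt_rt (fo env_functor (fo cr_functor T))) _
      (rthom_ax_XinvX_of_arr T (cr_op T) (cr_pregpd T) (cr_tern T))).
    split; apply rthom_ext; try reflexivity; apply functional_extensionality.
    + exact (XinvX_of_arrK T _ (cr_pregpd T) (cr_tern T)).
    + exact (arr_of_XinvXK T _ (cr_pregpd T) (cr_tern T)).
  - intros T T' f. apply rthom_ext; try reflexivity. apply functional_extensionality.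
    exact (arr_of_XinvX_natural T T' _ (cr_pregpd T) _ (cr_pregpd T') (cr_tern T) (cr_tern T')
      f (fm cr_functor f) (fun x => eq_refl)).
Qed.

Lemma cl_op_ract_compatible (T : BTors) : ract_compatible (bt_rt T) (cl_op (bt_lt T)).
Proof.
  intros x y z h Hh Eh Hy.
  assert (H2 : rt_al (bt_rt T) x = rt_al (bt_rt T) z) by (apply rt_orbitP; eauto).
  change (tern (cl_data (bt_lt T)) x y z = ract (bt_rt T) y h).
  rewrite <- (cr_op_bt T x y z Hy H2).
  change (pop (cr_data (bt_rt T)) x y z Hy H2 = ract (bt_rt T) y h).
  rewrite ternE. apply cr_tern; auto.
Qed.

Lemma cr_op_lact_compatible (T : BTors) : lact_compatible (bt_lt T) (cr_op (bt_rt T)).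
Proof.
  intros x y z g Hg Eg Hz.
  assert (H1 : lt_be (bt_lt T) x = lt_be (bt_lt T) y) by (apply lt_orbitP; eauto).
  change (tern (cr_data (bt_rt T)) x y z = lact (bt_lt T) g z).
  rewrite <- (ternE (cr_data (bt_rt T)) x y z H1 Hz).
  change (cr_op (bt_rt T) x y z H1 Hz = lact (bt_lt T) g z).
  rewrite cr_op_bt. exact (cl_tern (bt_lt T) x y z g Hg Eg Hz).
Qed.

Section BitorsorComparison.
Variable T : BTors.
Variable op : forall x y z : bt_X T, bt_be T x = bt_be T y -> bt_al T x = bt_al T z -> bt_X T.
Variable p : pregpd_ax (Build_PData (bt_A T) (bt_B T) (bt_X T) (bt_al T) (bt_be T) op).
Hypothesis compat_l : lact_compatible (bt_lt T) op.
Hypothesis compat_r : ract_compatible (bt_rt T) op.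
Local Notation P := (lt_pregpd (bt_lt T) op p).

Definition bthom_of_env : BTHom (fo env_functor P) T :=
  Build_BTHom (fo env_functor P) T
    (@Build_BTHomData (env_data P) T (fun a => a) (fun b => b) (fun x => x)
       (arr_of_XXinv (bt_lt T) op p) (arr_of_XinvX (bt_rt T) op p))
    (conj (lthom_ax_arr_of_XXinv (bt_lt T) op p compat_l)
          (rthom_ax_arr_of_XinvX (bt_rt T) op p compat_r)).

Definition bthom_to_env : BTHom T (fo env_functor P) :=
  Build_BTHom T (fo env_functor P)
    (@Build_BTHomData T (env_data P) (fun a => a) (fun b => b) (fun x => x)
       (XXinv_of_arr (bt_lt T) op p) (XinvX_of_arr (bt_rt T) op p))
    (conj (lthom_ax_XXinv_of_arr (bt_lt T) op p compat_l)
          (rthom_ax_XinvX_of_arr (bt_rt T) op p compat_r)).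

Lemma is_iso_bthom_of_env : is_iso (C := BTCat) bthom_of_env.
Proof.
  exists bthom_to_env.
  split; apply bthom_ext; try reflexivity; apply functional_extensionality.
  - exact (XXinv_of_arrK (bt_lt T) op p compat_l).
  - exact (XinvX_of_arrK (bt_rt T) op p compat_r).
  - exact (arr_of_XXinvK (bt_lt T) op p compat_l).
  - exact (arr_of_XinvXK (bt_rt T) op p compat_r).
Qed.

End BitorsorComparison.

Lemma env_cl_U_r_iso_id : nat_iso (Fcomp env_functor (Fcomp cl_functor U_r)) (Fid BTCat).
Proof.
  exists (fun T => bthom_of_env T _ _ (cl_tern (bt_lt T)) (cl_op_ract_compatible T)).
  split; [intro T; apply is_iso_bthom_of_env|].
  intros T T' f. apply bthom_ext; try reflexivity; apply functional_extensionality.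
  - exact (arr_of_XXinv_natural (bt_lt T) (bt_lt T') _ (cl_pregpd (bt_lt T)) _
      (cl_pregpd (bt_lt T')) (cl_tern (bt_lt T)) (cl_tern (bt_lt T')) (bh_lt f)
      (fm (Fcomp cl_functor U_r) f) (fun x => eq_refl)).
  - exact (arr_of_XinvX_natural (bt_rt T) (bt_rt T') _ (cl_pregpd (bt_lt T)) _
      (cl_pregpd (bt_lt T'))
      (cl_op_ract_compatible T) (cl_op_ract_compatible T') (bh_rt f)
      (fm (Fcomp cl_functor U_r) f) (fun x => eq_refl)).
Qed.

Lemma env_cr_U_l_iso_id : nat_iso (Fcomp env_functor (Fcomp cr_functor U_l)) (Fid BTCat).
Proof.
  exists (fun T => bthom_of_env T _ _ (cr_op_lact_compatible T) (cr_tern (bt_rt T))).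
  split; [intro T; apply is_iso_bthom_of_env|].
  intros T T' f. apply bthom_ext; try reflexivity; apply functional_extensionality.
  - exact (arr_of_XXinv_natural (bt_lt T) (bt_lt T') _ (cr_pregpd (bt_rt T)) _
      (cr_pregpd (bt_rt T'))
      (cr_op_lact_compatible T) (cr_op_lact_compatible T') (bh_lt f)
      (fm (Fcomp cr_functor U_l) f) (fun x => eq_refl)).
  - exact (arr_of_XinvX_natural (bt_rt T) (bt_rt T') _ (cr_pregpd (bt_rt T)) _
      (cr_pregpd (bt_rt T')) (cr_tern (bt_rt T)) (cr_tern (bt_rt T')) (bh_rt f)
      (fm (Fcomp cr_functor U_l) f) (fun x => eq_refl)).
Qed.

(** * Equivalences *)

Lemma hcast_phom_id_inv_l (P Q : Pregpd) (e : P = Q) :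
  phom_comp P Q P (@hcast PCat P Q P P e eq_refl (phom_id P))
    (@hcast PCat P P P Q eq_refl e (phom_id P)) = phom_id P.
Proof. destruct e. apply phom_ext; reflexivity. Qed.

Lemma hcast_phom_id_inv_r (P Q : Pregpd) (e : P = Q) :
  phom_comp Q P Q (@hcast PCat P P P Q eq_refl e (phom_id P))
    (@hcast PCat P Q P P e eq_refl (phom_id P)) = phom_id Q.
Proof. destruct e. apply phom_ext; reflexivity. Qed.

Lemma hcast_phom_natural (P Q P' Q' : Pregpd) (e1 : P = P') (e2 : Q = Q')
  (h : PHom P Q) (f : PHom P' Q') :
  @hcast PCat P P' Q Q' e1 e2 h = f ->
  phom_comp P Q Q' (@hcast PCat Q Q Q Q' eq_refl e2 (phom_id Q)) h =
  phom_comp P P' Q' f (@hcast PCat P P P P' eq_refl e1 (phom_id P)).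
Proof. destruct e1, e2. cbn. intros <-. apply phom_ext; reflexivity. Qed.

Lemma functor_eq_id_nat_iso (F : Functor PCat PCat) :
  functor_eq F (Fid PCat) -> nat_iso F (Fid PCat).
Proof.
  intros [e He].
  exists (fun P => @hcast PCat (fo F P) (fo F P) (fo F P) P eq_refl (e P) (phom_id (fo F P))).
  split.
  - intro P. exists (@hcast PCat (fo F P) P (fo F P) (fo F P) (e P) eq_refl (phom_id (fo F P))).
    split; [apply hcast_phom_id_inv_l | apply hcast_phom_id_inv_r].
  - intros P Q f. apply hcast_phom_natural, He.
Qed.

Lemma is_equivalence_of {C D : Cat} (F : Functor C D) (G : Functor D C) :
  is_functor F -> is_functor G -> nat_iso (Fcomp G F) (Fid C) -> nat_iso (Fcomp F G) (Fid D) ->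
  is_equivalence F.
Proof. intros. split; [|exists G]; auto. Qed.

Theorem theorem2 :
  exists (hcl : forall T : LTors, pregpd_ax (cl_data T))
         (hclm : forall (T T' : LTors) (f : LTHom T T'), phom_ax (cl_hom_data f))
         (hcr : forall T : RTors, pregpd_ax (cr_data T))
         (hcrm : forall (T T' : RTors) (f : RTHom T T'), phom_ax (cr_hom_data f))
         (henv : forall P : Pregpd, btors_ax (env_data P))
         (henvm : forall (P P' : Pregpd) (f : PHom P P'), bthom_ax (env_hom_data f)),
    (* (i) *)
    (is_equivalence U_l /\ is_equivalence U_r /\
     is_equivalence (c_l hcl hclm) /\ is_equivalence (c_r hcr hcrm) /\
     is_equivalence (env henv henvm)) /\
    (* (ii) *)
    functor_eq (Fcomp (c_r hcr hcrm) U_l) (Fcomp (c_l hcl hclm) U_r) /\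
    (* (iii) *)
    functor_eq (Fcomp (c_l hcl hclm) (Fcomp U_r (env henv henvm))) (Fid PCat) /\
    functor_eq (Fcomp (c_r hcr hcrm) (Fcomp U_l (env henv henvm))) (Fid PCat) /\
    (* (iv) *)
    nat_iso (Fcomp (env henv henvm) (Fcomp (c_l hcl hclm) U_r)) (Fid BTCat) /\
    nat_iso (Fcomp (env henv henvm) (Fcomp (c_r hcr hcrm) U_l)) (Fid BTCat) /\
    nat_iso (Fcomp U_r (Fcomp (env henv henvm) (c_l hcl hclm))) (Fid LTCat) /\
    nat_iso (Fcomp U_l (Fcomp (env henv henvm) (c_r hcr hcrm))) (Fid RTCat).
Proof.
  exists cl_pregpd, cl_phom, cr_pregpd, cr_phom, env_btors, env_bthom.
  fold cl_functor cr_functor env_functor.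
  pose proof (functor_eq_id_nat_iso _ cl_U_r_env_eq_id) as cl_U_r_env_iso.
  pose proof (functor_eq_id_nat_iso _ cr_U_l_env_eq_id) as cr_U_l_env_iso.
  split; [split; [|split; [|split; [|split]]]|].
  - exact (is_equivalence_of U_l (Fcomp env_functor cr_functor) is_functor_U_l
      (is_functor_Fcomp _ _ is_functor_env is_functor_cr) env_cr_U_l_iso_id U_l_env_cr_iso_id).
  - exact (is_equivalence_of U_r (Fcomp env_functor cl_functor) is_functor_U_r
      (is_functor_Fcomp _ _ is_functor_env is_functor_cl) env_cl_U_r_iso_id U_r_env_cl_iso_id).
  - exact (is_equivalence_of cl_functor (Fcomp U_r env_functor) is_functor_cl
      (is_functor_Fcomp _ _ is_functor_U_r is_functor_env) U_r_env_cl_iso_id cl_U_r_env_iso).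
  - exact (is_equivalence_of cr_functor (Fcomp U_l env_functor) is_functor_cr
      (is_functor_Fcomp _ _ is_functor_U_l is_functor_env) U_l_env_cr_iso_id cr_U_l_env_iso).
  - exact (is_equivalence_of env_functor (Fcomp cl_functor U_r) is_functor_env
      (is_functor_Fcomp _ _ is_functor_cl is_functor_U_r) cl_U_r_env_iso env_cl_U_r_iso_id).
  - exact (conj cr_U_l_eq_cl_U_r (conj cl_U_r_env_eq_id (conj cr_U_l_env_eq_id
      (conj env_cl_U_r_iso_id (conj env_cr_U_l_iso_id
      (conj U_r_env_cl_iso_id U_l_env_cr_iso_id)))))).
Qed.
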